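(* Let $\alpha$ be a PV number and let $a:\mathbb N\to\mathbb C$, $\tau:\mathbb N\to\mathbb Z$ (integer valued) satisfy $\sum_{k}|a(k)|e^{\eta|\tau(k)|}<\infty$ for some $\eta>0$, and $\sum_k a(k)=|\alpha|$. Let $\varphi$ be a scalar valued refinable function for the data $(\alpha,a,\tau)$. Then $\widehat\varphi$ does not vanish at infinity, i.e. it is not true that $\widehat\varphi(y)\to 0$ as $|y|\to\infty$; consequently $\varphi$ is not integrable.
   Context: A PV number is a real algebraic integer $\alpha$ of degree $d\ge 2$ all of whose Galois conjugates other than $\alpha$ itself have modulus $<1$ (so $|\alpha|>1$). Put $\widehat a(y)=|\alpha|^{-1}\sum_{k\in\mathbb N}a(k)e^{-2\pi i\tau(k)y}$, $y\in\mathbb R$. A scalar valued refinable function for $(\alpha,a,\tau)$ is a nonzero complex tempered distribution $\varphi$ on $\mathbb R$ satisfying $\varphi(x)=\sum_{k\in\mathbb N}a(k)\varphi(\alpha x-\tau(k))$, whose Fourier transform $\widehat\varphi(y)=\int\varphi(x)e^{-2\pi i xy}\,dx$ is a continuous function with $\widehat\varphi(0)\neq0$; equivalently $\widehat\varphi(y)=\widehat a(y\alpha^{-1})\widehat\varphi(y\alpha^{-1})$ for all $y\in\mathbb R$. *)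

From Stdlib Require Import Reals ZArith QArith List.
Open Scope R_scope.

Record Cplx := mkC { Re : R ; Im : R }.
Definition RtoC (x : R) : Cplx := mkC x 0.
Definition C0 : Cplx := RtoC 0.
Definition Cadd (z w : Cplx) : Cplx := mkC (Re z + Re w) (Im z + Im w).
Definition Csub (z w : Cplx) : Cplx := mkC (Re z - Re w) (Im z - Im w).
Definition Cmul (z w : Cplx) : Cplx :=
  mkC (Re z * Re w - Im z * Im w) (Re z * Im w + Im z * Re w).
Definition Cmod (z : Cplx) : R := sqrt (Re z ^ 2 + Im z ^ 2).
Definition Cexpi (t : R) : Cplx := mkC (cos t) (sin t).

Fixpoint Cpsum (u : nat -> Cplx) (n : nat) : Cplx :=
  match n with O => C0 | S m => Cadd (Cpsum u m) (u m) end.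
Definition Cseries (u : nat -> Cplx) (l : Cplx) : Prop :=
  forall eps, eps > 0 -> exists N : nat, forall n, (n >= N)%nat ->
    Cmod (Csub (Cpsum u n) l) < eps.

(** * Polynomials (coefficient lists, constant term first) *)
Fixpoint Zpoly_evalC (P : list Z) (z : Cplx) : Cplx :=
  match P with nil => C0 | c :: P' => Cadd (RtoC (IZR c)) (Cmul z (Zpoly_evalC P' z)) end.
Fixpoint Qpoly_evalR (P : list Q) (x : R) : R :=
  match P with nil => 0 | c :: P' => Q2R c + x * Qpoly_evalR P' x end.

Definition minpoly_of_degree (alpha : R) (d : nat) (P : list Z) : Prop :=
  length P = S d /\ nth d P 0%Z = 1%Z /\
  Zpoly_evalC P (RtoC alpha) = C0 /\
  (forall Qp : list Q, (length Qp <= d)%nat -> Qpoly_evalR Qp alpha = 0 ->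
     forall i, Qeq (nth i Qp 0%Q) 0%Q).

(** PV number: real algebraic integer of degree d >= 2 all of whose Galois
    conjugates other than alpha (the other complex roots of its minimal
    polynomial) have modulus < 1. *)
Definition is_PV (alpha : R) : Prop :=
  exists (d : nat) (P : list Z), (2 <= d)%nat /\ minpoly_of_degree alpha d P /\
    (forall z : Cplx, Zpoly_evalC P z = C0 -> z <> RtoC alpha -> Cmod z < 1).

(** ahat(y) = |alpha|^{-1} sum_k a(k) e^{-2 pi i tau(k) y}; "ahat_val alpha a tau y v"
    means that this series converges and ahat(y) = v. *)
Definition ahat_val (alpha : R) (a : nat -> Cplx) (tau : nat -> Z) (y : R) (v : Cplx) : Prop :=
  Cseries (fun k => Cmul (a k) (Cexpi (- 2 * PI * IZR (tau k) * y)))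
          (Cmul (RtoC (Rabs alpha)) v).

Definition Ccontinuous (f : R -> Cplx) : Prop :=
  forall x eps, eps > 0 -> exists delta, delta > 0 /\
    forall x', Rabs (x' - x) < delta -> Cmod (Csub (f x') (f x)) < eps.

(** Fourier-side characterization (from the paper) of the Fourier transform
    phihat of a scalar valued refinable function for (alpha, a, tau):
    continuous, phihat(0) <> 0, and phihat(y) = ahat(y/alpha) phihat(y/alpha). *)
Definition refinable_FT (alpha : R) (a : nat -> Cplx) (tau : nat -> Z) (phihat : R -> Cplx) : Prop :=
  Ccontinuous phihat /\ phihat 0 <> C0 /\
  forall y, exists v, ahat_val alpha a tau (y / alpha) v /\
    phihat y = Cmul v (phihat (y / alpha)).

Definition vanishes_at_infinity (f : R -> Cplx) : Prop :=
  forall eps, eps > 0 -> exists M, forall y, Rabs y > M -> Cmod (f y) < eps.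

(* Put f(y) = sum_k a(k) e^{-2 pi i tau(k) y} = |alpha| ahat(y).  Iterating the refinement
   equation gives |phihat(alpha^n y)| = prod_{i<n} (|f(alpha^i y)| / |alpha|) |phihat(y)|.
   The series f is 1-periodic, equals |alpha| at the integers, is Lipschitz, and is real
   analytic with Taylor coefficients O(rho^m) at every point; as f(0) <> 0 it is not flat
   anywhere, so it has finitely many zeros modulo 1.
   As alpha is a PV number, alpha^m is irrational for m >= 1, and the integer recurrence u
   whose characteristic polynomial is the minimal polynomial of alpha satisfies
   u(n) = c alpha^n + O(theta^n) with c <> 0 and theta < 1.  Take
   y0 = s q c / alpha^M.  The points alpha^(M+N+j) y0 are O(theta^j)-close to the integers
   s q u(N+j), so the tail of the product stays >= 1/2, and a pigeonhole choice of s <= 2^k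
   keeps the first M+N factors away from the zeros of f.  Hence |phihat(alpha^n y0)| stays
   bounded below while alpha^n y0 goes to infinity. *)

From Pilot Require Import Defs.
From Stdlib Require Import Reals ZArith QArith List Lra Lia Classical ClassicalEpsilon Wf_nat.
From Coquelicot Require Complex Coquelicot.
From mathcomp Require ssreflect ssrbool ssrfun eqtype ssrnat seq fintype bigop ssralg ssrnum Rstruct complex.
Open Scope R_scope.

(** * Complex numbers *)

Definition Cone : Cplx := RtoC 1.
Definition Copp (z : Cplx) : Cplx := mkC (- Re z) (- Im z).

Lemma Cplx_eq (z w : Cplx) : Re z = Re w -> Im z = Im w -> z = w.
Proof. destruct z, w; simpl; intros; subst; reflexivity. Qed.

Ltac Cplx_ring := apply Cplx_eq; simpl; ring.

Lemma Cplx_ring_theory : ring_theory C0 Cone Cadd Cmul Csub Copp (@eq Cplx).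
Proof. constructor; intros; unfold C0, Cone, RtoC, Cadd, Cmul, Csub, Copp; Cplx_ring. Qed.
Add Ring Cplx_ring_inst : Cplx_ring_theory.

Definition to_C (z : Cplx) : Complex.C := (Re z, Im z).

Lemma Cmod_to_C z : Cmod z = Complex.Cmod (to_C z).
Proof. reflexivity. Qed.

Lemma Cmod_ge0 z : 0 <= Cmod z.
Proof. apply sqrt_pos. Qed.

Lemma Cmod_triangle z w : Cmod (Cadd z w) <= Cmod z + Cmod w.
Proof. rewrite !Cmod_to_C. exact (Complex.Cmod_triangle (to_C z) (to_C w)). Qed.

Lemma Cmod_mul z w : Cmod (Cmul z w) = Cmod z * Cmod w.
Proof. rewrite !Cmod_to_C. exact (Complex.Cmod_mult (to_C z) (to_C w)). Qed.

Lemma Cmod_RtoC x : Cmod (RtoC x) = Rabs x.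
Proof. unfold Cmod, RtoC; simpl. rewrite <- sqrt_Rsqr_abs. f_equal. unfold Rsqr. ring. Qed.

Lemma Cmod_C0 : Cmod C0 = 0.
Proof. unfold C0. rewrite Cmod_RtoC. apply Rabs_R0. Qed.

Lemma Cmod_eq0 z : Cmod z = 0 -> z = C0.
Proof.
  intro H. rewrite Cmod_to_C in H. apply Complex.Cmod_eq_0 in H.
  destruct z; unfold to_C in H; simpl in H. injection H; intros; subst. reflexivity.
Qed.

Lemma Cmod_gt0 z : z <> C0 -> 0 < Cmod z.
Proof.
  intro Hz. destruct (Rle_lt_or_eq_dec _ _ (Cmod_ge0 z)) as [H|H]; auto.
  exfalso. apply Hz, Cmod_eq0. auto.
Qed.

Lemma Cmod_opp z : Cmod (Copp z) = Cmod z.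
Proof. unfold Cmod, Copp; simpl. f_equal. ring. Qed.

Lemma Cmod_sub_sym z w : Cmod (Csub z w) = Cmod (Csub w z).
Proof. replace (Csub z w) with (Copp (Csub w z)) by ring. apply Cmod_opp. Qed.

Lemma Cmod_sub_ge z w : Cmod z - Cmod w <= Cmod (Csub z w).
Proof.
  pose proof (Cmod_triangle (Csub z w) w) as H. replace (Cadd (Csub z w) w) with z in H by ring. lra.
Qed.

Lemma Rabs_Re_le z : Rabs (Re z) <= Cmod z.
Proof. unfold Cmod. rewrite <- sqrt_Rsqr_abs. apply sqrt_le_1_alt. unfold Rsqr. nra. Qed.

Lemma Rabs_Im_le z : Rabs (Im z) <= Cmod z.
Proof. unfold Cmod. rewrite <- sqrt_Rsqr_abs. apply sqrt_le_1_alt. unfold Rsqr. nra. Qed.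

Lemma Cmod_le_Re_Im z : Cmod z <= Rabs (Re z) + Rabs (Im z).
Proof.
  destruct z as [x y]. unfold Cmod; simpl.
  pose proof (Rabs_pos x); pose proof (Rabs_pos y).
  apply Rsqr_incr_0_var; [|lra].
  rewrite Rsqr_sqrt by nra.
  pose proof (Rsqr_abs x); pose proof (Rsqr_abs y). unfold Rsqr in *. nra.
Qed.

Lemma RtoC_inj x y : RtoC x = RtoC y -> x = y.
Proof. intro H. injection H. auto. Qed.

Lemma Cmul_RtoC x y : Cmul (RtoC x) (RtoC y) = RtoC (x * y).
Proof. Cplx_ring. Qed.

Lemma Csub_RtoC x y : Csub (RtoC x) (RtoC y) = RtoC (x - y).
Proof. Cplx_ring. Qed.

Lemma Cmod_Cexpi t : Cmod (Cexpi t) = 1.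
Proof.
  unfold Cmod, Cexpi; simpl. pose proof (sin2_cos2 t) as H. unfold Rsqr in H.
  replace (cos t * (cos t * 1) + sin t * (sin t * 1)) with 1 by lra. apply sqrt_1.
Qed.

Lemma Cexpi_2PI_periodic x z : Cexpi (x + 2 * IZR z * PI) = Cexpi x.
Proof.
  assert (Hs : sin (IZR z * PI) = 0) by (apply sin_eq_0_1; exists z; auto).
  assert (Hc2 : cos (2 * (IZR z * PI)) = 1) by (rewrite cos_2a_sin, Hs; ring).
  assert (Hs2 : sin (2 * (IZR z * PI)) = 0) by (rewrite sin_2a, Hs; ring).
  unfold Cexpi. replace (2 * IZR z * PI) with (2 * (IZR z * PI)) by ring.
  rewrite cos_plus, sin_plus, Hc2, Hs2. apply Cplx_eq; simpl; ring.
Qed.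

(** * Finite sums and series *)

Fixpoint Rpsum (b : nat -> R) (n : nat) : R :=
  match n with O => 0 | S m => Rpsum b m + b m end.

Lemma Rpsum_sum_f_R0 b n : Rpsum b (S n) = sum_f_R0 b n.
Proof. induction n; simpl in *; [ring|]. rewrite <- IHn. simpl. ring. Qed.

Lemma Rpsum_le b b' n : (forall k, b k <= b' k) -> Rpsum b n <= Rpsum b' n.
Proof. intros H; induction n; simpl; [lra|]. specialize (H n); lra. Qed.

Lemma Rpsum_diff_le b b' n m : (forall k, b k <= b' k) -> (n <= m)%nat ->
  Rpsum b m - Rpsum b n <= Rpsum b' m - Rpsum b' n.
Proof. intros H Hnm. induction Hnm; simpl; [lra|]. specialize (H m). lra. Qed.

Lemma Rpsum_ge0 b n : (forall k, 0 <= b k) -> 0 <= Rpsum b n.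
Proof. intro H. induction n; simpl; [lra|]. specialize (H n). lra. Qed.

Lemma Rpsum_scal c b n : Rpsum (fun k => c * b k) n = c * Rpsum b n.
Proof. induction n; simpl; [ring|]. rewrite IHn; ring. Qed.

Lemma Rpsum_geom_le C th J : 0 <= C -> 0 <= th < 1 ->
  Rpsum (fun j => C * th ^ j) J <= C / (1 - th).
Proof.
  intros HC Hth. rewrite Rpsum_scal.
  assert (E : Rpsum (fun j => th ^ j) J * (1 - th) = 1 - th ^ J).
  { induction J; simpl; [ring|]. rewrite Rmult_plus_distr_r, IHJ. ring. }
  assert (0 <= th ^ J) by (apply pow_le; lra).
  assert (Rpsum (fun j => th ^ j) J <= / (1 - th)).
  { apply (Rmult_le_reg_r (1 - th)); [lra|]. rewrite E, Rinv_l; lra. }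
  unfold Rdiv. apply Rmult_le_compat_l; auto.
Qed.

Lemma infinite_sum_Rpsum b l : infinite_sum b l -> Un_cv (Rpsum b) l.
Proof.
  intros H eps Heps. destruct (H eps Heps) as [N HN]. exists (S N). intros [|n] Hn; [lia|].
  rewrite Rpsum_sum_f_R0. apply HN. lia.
Qed.

Lemma Rpsum_mono b n m : (forall k, 0 <= b k) -> (n <= m)%nat -> Rpsum b n <= Rpsum b m.
Proof. intros Hb Hnm. induction Hnm; simpl; [lra|]. specialize (Hb m). lra. Qed.

Lemma Rpsum_le_infinite_sum b l n : (forall k, 0 <= b k) -> infinite_sum b l -> Rpsum b n <= l.
Proof.
  intros Hb Hl. apply infinite_sum_Rpsum in Hl.
  apply Rnot_lt_le. intro H. destruct (Hl (Rpsum b n - l)) as [N HN]; [lra|].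
  specialize (HN (max N n) (Nat.le_max_l _ _)). unfold R_dist in HN. apply Rabs_def2 in HN.
  pose proof (Rpsum_mono b n (max N n) Hb (Nat.le_max_r _ _)). lra.
Qed.

Lemma infinite_sum_scal b l c : infinite_sum b l -> infinite_sum (fun k => c * b k) (c * l).
Proof.
  intro H. assert (Hc : Un_cv (fun _ => c) c).
  { intros e He; exists O; intros; unfold R_dist; rewrite Rminus_diag, Rabs_R0; lra. }
  assert (E : forall n, sum_f_R0 (fun k => c * b k) n = c * sum_f_R0 b n).
  { induction n; simpl; [ring|]. rewrite IHn. ring. }
  intros e He. destruct (CV_mult _ _ _ _ Hc H e He) as [N HN]. exists N. intros n Hn.
  rewrite E. apply HN; auto.
Qed.

Lemma Un_cv_of_dominated_increments (r B : nat -> R) l :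
  (forall n m, (n <= m)%nat -> Rabs (r m - r n) <= B m - B n) -> Un_cv B l -> exists x, Un_cv r x.
Proof.
  intros H Hl.
  assert (HB : Cauchy_crit B) by (apply CV_Cauchy; exists l; auto).
  assert (Hr : Cauchy_crit r).
  { intros eps He. destruct (HB eps He) as [N HN]. exists N. intros n m Hn Hm. unfold R_dist in *.
    destruct (le_ge_dec n m) as [Hnm|Hnm].
    - rewrite Rabs_minus_sym. eapply Rle_lt_trans; [apply H, Hnm|].
      eapply Rle_lt_trans; [apply Rle_abs|]. auto.
    - eapply Rle_lt_trans; [apply H, Hnm|].
      eapply Rle_lt_trans; [apply Rle_abs|]. auto. }
  destruct (R_complete r Hr) as [x Hx]. exists x; auto.
Qed.

Lemma Cpsum_add u v n : Cpsum (fun k => Cadd (u k) (v k)) n = Cadd (Cpsum u n) (Cpsum v n).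
Proof. induction n; simpl; [Cplx_ring|]. rewrite IHn; ring. Qed.

Lemma Cpsum_scal c u n : Cpsum (fun k => Cmul c (u k)) n = Cmul c (Cpsum u n).
Proof. induction n; simpl; [Cplx_ring|]. rewrite IHn; ring. Qed.

Lemma Cpsum_ext u v n : (forall k, u k = v k) -> Cpsum u n = Cpsum v n.
Proof. intros H; induction n; simpl; auto. rewrite IHn, H; auto. Qed.

Lemma Cpsum_zero u n : (forall j, (j < n)%nat -> u j = C0) -> Cpsum u n = C0.
Proof.
  induction n; intros H; simpl; auto.
  rewrite IHn by (intros; apply H; lia). rewrite H by lia. ring.
Qed.

Lemma Re_Cpsum u n : Re (Cpsum u n) = Rpsum (fun k => Re (u k)) n.
Proof. induction n; simpl; auto. rewrite IHn; auto. Qed.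

Lemma Im_Cpsum u n : Im (Cpsum u n) = Rpsum (fun k => Im (u k)) n.
Proof. induction n; simpl; auto. rewrite IHn; auto. Qed.

Lemma Cmod_Cpsum_le u n : Cmod (Cpsum u n) <= Rpsum (fun k => Cmod (u k)) n.
Proof.
  induction n; simpl; [rewrite Cmod_C0; lra|].
  pose proof (Cmod_triangle (Cpsum u n) (u n)); lra.
Qed.

Lemma Cmod_Cpsum_diff_le u n m : (n <= m)%nat ->
  Cmod (Csub (Cpsum u m) (Cpsum u n)) <= Rpsum (fun k => Cmod (u k)) m - Rpsum (fun k => Cmod (u k)) n.
Proof.
  intros H; induction H.
  - replace (Csub (Cpsum u n) (Cpsum u n)) with C0 by ring. rewrite Cmod_C0; lra.
  - simpl. replace (Csub (Cadd (Cpsum u m) (u m)) (Cpsum u n))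
      with (Cadd (Csub (Cpsum u m) (Cpsum u n)) (u m)) by ring.
    pose proof (Cmod_triangle (Csub (Cpsum u m) (Cpsum u n)) (u m)). lra.
Qed.

Lemma Cseries_ext u v L : (forall k, u k = v k) -> Cseries u L -> Cseries v L.
Proof.
  intros H Hu eps He. destruct (Hu eps He) as [N HN]. exists N; intros n Hn.
  rewrite <- (Cpsum_ext u v n H). auto.
Qed.

Lemma Cseries_add u v L M : Cseries u L -> Cseries v M ->
  Cseries (fun k => Cadd (u k) (v k)) (Cadd L M).
Proof.
  intros Hu Hv eps He.
  destruct (Hu (eps/2)) as [N1 H1]; [lra|]. destruct (Hv (eps/2)) as [N2 H2]; [lra|].
  exists (max N1 N2). intros n Hn. rewrite Cpsum_add.
  replace (Csub (Cadd (Cpsum u n) (Cpsum v n)) (Cadd L M))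
    with (Cadd (Csub (Cpsum u n) L) (Csub (Cpsum v n) M)) by ring.
  eapply Rle_lt_trans; [apply Cmod_triangle|].
  specialize (H1 n ltac:(lia)); specialize (H2 n ltac:(lia)). lra.
Qed.

Lemma Cseries_scal c u L : Cseries u L -> Cseries (fun k => Cmul c (u k)) (Cmul c L).
Proof.
  intros Hu eps He. pose proof (Cmod_ge0 c).
  destruct (Hu (eps / (Cmod c + 1))) as [N H1]; [apply Rdiv_lt_0_compat; lra|].
  exists N. intros n Hn. specialize (H1 n Hn). rewrite Cpsum_scal.
  replace (Csub (Cmul c (Cpsum u n)) (Cmul c L)) with (Cmul c (Csub (Cpsum u n) L)) by ring.
  rewrite Cmod_mul. pose proof (Cmod_ge0 (Csub (Cpsum u n) L)).
  apply Rmult_lt_compat_l with (r := Cmod c + 1) in H1; [|lra].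
  replace ((Cmod c + 1) * (eps / (Cmod c + 1))) with eps in H1 by (field; lra). nra.
Qed.

Lemma Cseries_sub u v L M : Cseries u L -> Cseries v M ->
  Cseries (fun k => Csub (u k) (v k)) (Csub L M).
Proof.
  intros Hu Hv. replace (Csub L M) with (Cadd L (Cmul (RtoC (-1)) M)) by Cplx_ring.
  eapply Cseries_ext; [|apply Cseries_add; [apply Hu|apply Cseries_scal, Hv]].
  intro k; simpl. Cplx_ring.
Qed.

Lemma Cseries_Cpsum (g : nat -> nat -> Cplx) (G : nat -> Cplx) n :
  (forall m, Cseries (fun k => g k m) (G m)) -> Cseries (fun k => Cpsum (g k) n) (Cpsum G n).
Proof.
  intro H. induction n; simpl.
  - intros e He. exists O. intros m _. rewrite Cpsum_zero by auto.
    replace (Csub C0 C0) with C0 by ring. rewrite Cmod_C0. lra.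
  - apply (Cseries_add (fun k => Cpsum (g k) n) (fun k => g k n)); auto.
Qed.

Lemma Cseries_Cmod_le u L B : Cseries u L -> (forall n, Cmod (Cpsum u n) <= B) -> Cmod L <= B.
Proof.
  intros Hu HB. apply Rnot_lt_le; intro H.
  destruct (Hu (Cmod L - B)) as [N HN]; [lra|]. specialize (HN N (le_n _)). specialize (HB N).
  pose proof (Cmod_sub_ge L (Cpsum u N)). rewrite Cmod_sub_sym in HN. lra.
Qed.

Lemma Cseries_unique u L M : Cseries u L -> Cseries u M -> L = M.
Proof.
  intros HL HM. assert (Hd : Cmod (Csub L M) <= 0).
  { apply (Cseries_Cmod_le _ _ _ (Cseries_sub u u L M HL HM)). intro n.
    rewrite (Cpsum_zero (fun k => Csub (u k) (u k))) by (intros; ring). rewrite Cmod_C0; lra. }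
  pose proof (Cmod_ge0 (Csub L M)).
  replace L with (Cadd (Csub L M) M) by ring. rewrite (Cmod_eq0 (Csub L M)) by lra. ring.
Qed.

Lemma Cseries_dominated u b l : (forall k, Cmod (u k) <= b k) -> infinite_sum b l ->
  exists L, Cseries u L.
Proof.
  intros Hub Hl. apply infinite_sum_Rpsum in Hl.
  assert (Hinc : forall n m, (n <= m)%nat ->
    Cmod (Csub (Cpsum u m) (Cpsum u n)) <= Rpsum b m - Rpsum b n).
  { intros n m Hnm. eapply Rle_trans; [apply Cmod_Cpsum_diff_le, Hnm|]. apply Rpsum_diff_le; auto. }
  destruct (Un_cv_of_dominated_increments (fun n => Re (Cpsum u n)) (Rpsum b) l) as [x Hx]; auto.
  { intros n m Hnm. pose proof (Rabs_Re_le (Csub (Cpsum u m) (Cpsum u n))). specialize (Hinc n m Hnm).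
    simpl in *. lra. }
  destruct (Un_cv_of_dominated_increments (fun n => Im (Cpsum u n)) (Rpsum b) l) as [y Hy]; auto.
  { intros n m Hnm. pose proof (Rabs_Im_le (Csub (Cpsum u m) (Cpsum u n))). specialize (Hinc n m Hnm).
    simpl in *. lra. }
  exists (mkC x y). intros eps He.
  destruct (Hx (eps/2)) as [N1 H1]; [lra|]. destruct (Hy (eps/2)) as [N2 H2]; [lra|].
  exists (max N1 N2). intros n Hn. eapply Rle_lt_trans; [apply Cmod_le_Re_Im|].
  specialize (H1 n ltac:(lia)); specialize (H2 n ltac:(lia)). unfold R_dist in *. simpl. lra.
Qed.

Lemma Cseries_dominated_le u b l L : (forall k, Cmod (u k) <= b k) -> infinite_sum b l ->
  Cseries u L -> Cmod L <= l.
Proof.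
  intros Hub Hl HL. apply (Cseries_Cmod_le u L l HL). intro n.
  eapply Rle_trans; [apply Cmod_Cpsum_le|]. eapply Rle_trans; [apply Rpsum_le, Hub|].
  apply Rpsum_le_infinite_sum; auto. intro k. specialize (Hub k). pose proof (Cmod_ge0 (u k)). lra.
Qed.

(** [C0] when the series diverges. *)
Definition Csum (u : nat -> Cplx) : Cplx := epsilon (inhabits C0) (Cseries u).

Lemma Csum_eq u L : Cseries u L -> Csum u = L.
Proof.
  intro H. apply (Cseries_unique u); [|exact H]. unfold Csum. apply epsilon_spec. exists L. exact H.
Qed.

Lemma Cseries_Csum u : (exists L, Cseries u L) -> Cseries u (Csum u).
Proof. intros [L H]. rewrite (Csum_eq u L H). exact H. Qed.

(** * Taylor expansion of [Cexpi] *)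

Module Taylor.
Import Coquelicot.Coquelicot.

Lemma Derive_n_cos_affine th t m s :
  Derive_n (fun s => cos (th + s * t)) m s = t ^ m * cos (th + s * t + INR m * (PI / 2)).
Proof.
  revert s. induction m; intro s.
  - simpl. rewrite Rmult_0_l, Rplus_0_r. ring.
  - simpl Derive_n. rewrite (Derive_ext _ _ _ IHm).
    assert (H : is_derive (fun s => t ^ m * cos (th + s * t + INR m * (PI / 2))) s
                  (t ^ m * (- sin (th + s * t + INR m * (PI / 2)) * t))).
    { auto_derive; auto. ring. }
    etransitivity; [apply is_derive_unique; exact H|]. rewrite S_INR.
    replace (th + s * t + (INR m + 1) * (PI / 2)) with (th + s * t + INR m * (PI / 2) + PI / 2) by ring.
    rewrite cos_plus, cos_PI2, sin_PI2. simpl. ring.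
Qed.

Lemma ex_derive_n_cos_affine th t k s : ex_derive_n (fun s => cos (th + s * t)) k s.
Proof.
  destruct k; simpl; auto.
  apply ex_derive_ext with (f := fun s => t ^ k * cos (th + s * t + INR k * (PI / 2))).
  - intro; symmetry; apply Derive_n_cos_affine.
  - auto_derive; auto.
Qed.

Lemma cos_taylor th t n :
  Rabs (cos (th + t) - sum_f_R0 (fun m => t ^ m / INR (fact m) * cos (th + INR m * (PI / 2))) n)
  <= Rabs t ^ S n / INR (fact (S n)).
Proof.
  destruct (Taylor_Lagrange (fun s => cos (th + s * t)) n 0 1 Rlt_0_1) as [z [_ E]].
  { intros; apply ex_derive_n_cos_affine. }
  replace (th + t) with (th + 1 * t) by ring. rewrite E.
  rewrite (sum_eq _ (fun m => t ^ m / INR (fact m) * cos (th + INR m * (PI / 2)))).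
  2:{ intros i _. rewrite Derive_n_cos_affine. replace (1 - 0) with 1 by ring. rewrite pow1.
      replace (th + 0 * t) with th by ring. field. apply INR_fact_neq_0. }
  rewrite Derive_n_cos_affine. replace (1 - 0) with 1 by ring. rewrite pow1.
  match goal with |- Rabs (?A + ?B - ?A) <= _ => replace (A + B - A) with B by ring end.
  assert (Hc : Rabs (cos (th + z * t + INR (S n) * (PI / 2))) <= 1) by apply Rabs_le, COS_bound.
  assert (Hf : 0 < / INR (fact (S n))) by apply Rinv_0_lt_compat, INR_fact_lt_0.
  pose proof (Rabs_pos (cos (th + z * t + INR (S n) * (PI / 2)))).
  pose proof (pow_le (Rabs t) (S n) (Rabs_pos t)).
  rewrite !Rabs_mult, <- RPow_abs.
  rewrite (Rabs_right (1 / _)) by (apply Rle_ge; unfold Rdiv; lra).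
  unfold Rdiv. rewrite Rmult_1_l, Rmult_comm.
  apply Rmult_le_compat_r; [lra|]. rewrite <- (Rmult_1_r (Rabs t ^ S n)) at 2.
  apply Rmult_le_compat_l; lra.
Qed.

Lemma pow_div_fact_le_exp x m : 0 <= x -> x ^ m / INR (fact m) <= exp x.
Proof.
  intro Hx. eapply Rle_trans; [|apply (exp_ge_taylor x m Hx)].
  destruct m; simpl; [lra|].
  assert (0 <= sum_f_R0 (fun k => x ^ k / INR (fact k)) m).
  { apply cond_pos_sum. intro k. apply Rmult_le_pos; [apply pow_le; auto|].
    left; apply Rinv_0_lt_compat, INR_fact_lt_0. }
  simpl in H. lra.
Qed.

End Taylor.

Lemma Cexpi_taylor th t n :
  Cmod (Csub (Cexpi (th + t))
     (Cpsum (fun m => Cmul (RtoC (t ^ m / INR (fact m))) (Cexpi (th + INR m * (PI / 2)))) (S n)))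
  <= 2 * (Rabs t ^ S n / INR (fact (S n))).
Proof.
  assert (sin_cos : forall x, sin x = cos (x - PI / 2)).
  { intro x. rewrite cos_minus, cos_PI2, sin_PI2. ring. }
  eapply Rle_trans; [apply Cmod_le_Re_Im|]. cbn [Csub Re Im].
  rewrite Re_Cpsum, Im_Cpsum, !Rpsum_sum_f_R0. unfold Cexpi, Cmul, RtoC. cbn [Re Im].
  pose proof (Taylor.cos_taylor th t n) as Hre.
  pose proof (Taylor.cos_taylor (th - PI / 2) t n) as Him.
  rewrite (sin_cos (th + t)). replace (th + t - PI / 2) with (th - PI / 2 + t) by ring.
  erewrite sum_eq with (An := fun k => _ * cos _ - 0 * sin _);
    [|intros; rewrite Rmult_0_l, Rminus_0_r; reflexivity].
  erewrite sum_eq with (An := fun k => _ * sin _ + 0 * cos _);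
    [|intros i _; rewrite Rmult_0_l, Rplus_0_r, sin_cos;
      replace (th + INR i * (PI / 2) - PI / 2) with (th - PI / 2 + INR i * (PI / 2)) by ring; reflexivity].
  lra.
Qed.

(** * The mask symbol *)

Definition mask_term (a : nat -> Cplx) (tau : nat -> Z) (y : R) (k : nat) : Cplx :=
  Cmul (a k) (Cexpi (- 2 * PI * IZR (tau k) * y)).

(** [|alpha| ahat(y)] in the notation of the statement. *)
Definition mask_symbol (a : nat -> Cplx) (tau : nat -> Z) (y : R) : Cplx :=
  Csum (mask_term a tau y).

Lemma mask_symbol_at_0 a tau L : Cseries a L -> mask_symbol a tau 0 = L.
Proof.
  intro H. apply Csum_eq. eapply Cseries_ext; [|exact H]. intro k.
  unfold mask_term, Cexpi. rewrite Rmult_0_r, cos_0, sin_0. Cplx_ring.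
Qed.

Lemma isolated_points_finite_01 (Z : R -> Prop) :
  (forall x, exists eps, eps > 0 /\ forall h, 0 < Rabs h < eps -> ~ Z (x + h)) ->
  exists Zl : list R, forall y, 0 <= y <= 1 -> Z y -> In y Zl.
Proof.
  intros Hiso.
  set (E := fun t => 0 <= t <= 1 /\ exists Zl : list R, forall y, 0 <= y <= t -> Z y -> In y Zl).
  assert (HE0 : E 0) by (split; [lra|]; exists (0 :: nil); intros y Hy _; left; lra).
  assert (Hb : bound E) by (exists 1; intros t [Ht _]; lra).
  destruct (completeness E Hb (ex_intro _ 0 HE0)) as [T [HT1 HT2]].
  assert (HT0 : 0 <= T) by (apply HT1; auto).
  assert (HT1' : T <= 1) by (apply HT2; intros t [Ht _]; lra).
  destruct (Hiso T) as [eps [He Hna]].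
  assert (Ht : exists t, E t /\ T - eps < t).
  { apply NNPP. intro Hn. assert (T <= T - eps); [|lra].
    apply HT2. intros t Et. apply Rnot_lt_le. intro; apply Hn; exists t; auto. }
  destruct Ht as [t [[Ht01 [Zl HZl]] Htt]].
  assert (HtT : t <= T) by (apply HT1; split; auto; exists Zl; auto).
  set (t' := Rmin 1 (T + eps / 2)).
  assert (Ht' : E t').
  { split; [split; [apply Rmin_glb; lra|apply Rmin_l]|].
    exists (T :: Zl). intros y Hy Hz.
    destruct (Rle_or_lt y t) as [Hyt|Hyt]; [right; apply HZl; auto; lra|].
    left. destruct (Req_dec y T) as [|Hne]; auto. exfalso.
    apply (Hna (y - T)); [|replace (T + (y - T)) with y by ring; auto].
    pose proof (Rmin_r 1 (T + eps / 2)).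
    split; [apply Rabs_pos_lt; lra|]. apply Rabs_def1; unfold t' in *; lra. }
  assert (Ht'1 : t' = 1).
  { assert (t' <= T) by (apply HT1; auto). unfold t', Rmin in *. destruct (Rle_dec 1 (T + eps / 2)); lra. }
  rewrite Ht'1 in Ht'. destruct Ht' as [_ [Zl' HZl']]. exists Zl'. auto.
Qed.

Section MaskSymbol.

Variables (a : nat -> Cplx) (tau : nat -> Z) (eta l : R).
Hypothesis eta_pos : eta > 0.
Hypothesis weights_sum : infinite_sum (fun k => Cmod (a k) * exp (eta * Rabs (IZR (tau k)))) l.

Definition weight k := Cmod (a k) * exp (eta * Rabs (IZR (tau k))).

Let f := mask_symbol a tau.

Lemma weight_ge0 k : 0 <= weight k.
Proof. unfold weight. apply Rmult_le_pos; [apply Cmod_ge0|left; apply exp_pos]. Qed.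

Lemma weights_sum_ge0 : 0 <= l.
Proof. exact (Rpsum_le_infinite_sum weight l O weight_ge0 weights_sum). Qed.

Lemma Cmod_mask_term_le y k : Cmod (mask_term a tau y k) <= weight k.
Proof.
  unfold mask_term, weight. rewrite Cmod_mul, Cmod_Cexpi, Rmult_1_r.
  pose proof (Cmod_ge0 (a k)). pose proof (exp_ineq1_le (eta * Rabs (IZR (tau k)))).
  assert (0 <= eta * Rabs (IZR (tau k))) by (apply Rmult_le_pos; [lra|apply Rabs_pos]). nra.
Qed.

Lemma mask_symbol_spec y : Cseries (mask_term a tau y) (f y).
Proof. apply Cseries_Csum, (Cseries_dominated _ weight l); [apply Cmod_mask_term_le|exact weights_sum]. Qed.

Lemma mask_symbol_periodic y z : f (y + IZR z) = f y.
Proof.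
  apply Csum_eq. eapply Cseries_ext; [|apply mask_symbol_spec]. intro k. unfold mask_term.
  replace (-2 * PI * IZR (tau k) * (y + IZR z))
    with (-2 * PI * IZR (tau k) * y + 2 * IZR (- (tau k * z)) * PI) by (rewrite opp_IZR, mult_IZR; ring).
  rewrite Cexpi_2PI_periodic. auto.
Qed.

Definition rho := 2 * PI / eta.

Lemma rho_pos : 0 < rho.
Proof. unfold rho. apply Rdiv_lt_0_compat; [pose proof PI_RGT_0; lra | lra]. Qed.

Lemma Rabs_pow_div_fact_le k h m :
  Rabs (-2 * PI * IZR (tau k) * h) ^ m / INR (fact m) <= (rho * Rabs h) ^ m * exp (eta * Rabs (IZR (tau k))).
Proof.
  replace (Rabs (-2 * PI * IZR (tau k) * h)) with (rho * Rabs h * (eta * Rabs (IZR (tau k)))).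
  2:{ unfold rho. rewrite !Rabs_mult, (Rabs_left (-2)), (Rabs_right PI) by (pose proof PI_RGT_0; lra).
      field. lra. }
  rewrite Rpow_mult_distr. unfold Rdiv. rewrite Rmult_assoc. apply Rmult_le_compat_l.
  - apply pow_le, Rmult_le_pos; [left; apply rho_pos|apply Rabs_pos].
  - apply Taylor.pow_div_fact_le_exp, Rmult_le_pos; [lra|apply Rabs_pos].
Qed.

(** [(d/dx)^m e^{i t x} / m! = (i t)^m / m! e^{i t x}], with the factor [i^m] written as the
    phase [m pi / 2]. *)
Definition taylor_term x m k :=
  Cmul (a k) (Cmul (RtoC ((-2 * PI * IZR (tau k)) ^ m / INR (fact m)))
                   (Cexpi (-2 * PI * IZR (tau k) * x + INR m * (PI / 2)))).

Definition taylor_coef x m := Csum (taylor_term x m).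

Lemma Cmod_taylor_term_le x m k : Cmod (taylor_term x m k) <= rho ^ m * weight k.
Proof.
  unfold taylor_term, weight. rewrite !Cmod_mul, Cmod_Cexpi, Cmod_RtoC, Rmult_1_r.
  pose proof (Rabs_pow_div_fact_le k 1 m) as H. rewrite Rmult_1_r, Rabs_R1, Rmult_1_r in H.
  unfold Rdiv in *. rewrite Rabs_mult, Rabs_inv, <- RPow_abs, (Rabs_right (INR _)) by (apply Rle_ge, pos_INR).
  pose proof (Cmod_ge0 (a k)).
  apply Rle_trans with (Cmod (a k) * (rho ^ m * exp (eta * Rabs (IZR (tau k))))); [|right; ring].
  apply Rmult_le_compat_l; auto.
Qed.

Lemma taylor_coef_spec x m : Cseries (taylor_term x m) (taylor_coef x m).
Proof.
  apply Cseries_Csum, (Cseries_dominated _ (fun k => rho ^ m * weight k) (rho ^ m * l)).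
  - apply Cmod_taylor_term_le.
  - apply infinite_sum_scal, weights_sum.
Qed.

Lemma taylor_coef_0 x : taylor_coef x 0 = f x.
Proof.
  apply Csum_eq. eapply Cseries_ext; [|apply mask_symbol_spec]. intro k. unfold taylor_term, mask_term.
  replace (-2 * PI * IZR (tau k) * x + INR 0 * (PI / 2)) with (-2 * PI * IZR (tau k) * x) by (simpl; ring).
  apply Cplx_eq; simpl; field.
Qed.

Lemma mask_term_taylor x h n k :
  Cmod (Csub (mask_term a tau (x + h) k) (Cpsum (fun m => Cmul (RtoC (h ^ m)) (taylor_term x m k)) (S n)))
  <= 2 * (rho * Rabs h) ^ S n * weight k.
Proof.
  set (th := -2 * PI * IZR (tau k) * x). set (t := -2 * PI * IZR (tau k) * h).
  assert (E : Cpsum (fun m => Cmul (RtoC (h ^ m)) (taylor_term x m k)) (S n) = Cmul (a k)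
       (Cpsum (fun m => Cmul (RtoC (t ^ m / INR (fact m))) (Cexpi (th + INR m * (PI / 2)))) (S n))).
  { rewrite <- Cpsum_scal. apply Cpsum_ext. intro m. unfold taylor_term. fold th.
    replace (t ^ m / INR (fact m)) with (h ^ m * ((-2 * PI * IZR (tau k)) ^ m / INR (fact m))).
    - rewrite <- Cmul_RtoC. ring.
    - unfold t. rewrite !Rpow_mult_distr. field. apply INR_fact_neq_0. }
  rewrite E. unfold mask_term.
  replace (-2 * PI * IZR (tau k) * (x + h)) with (th + t) by (unfold th, t; ring).
  replace (Csub (Cmul (a k) (Cexpi (th + t))) (Cmul (a k) _)) with (Cmul (a k) (Csub (Cexpi (th + t))
       (Cpsum (fun m => Cmul (RtoC (t ^ m / INR (fact m))) (Cexpi (th + INR m * (PI / 2)))) (S n)))) by ring.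
  rewrite Cmod_mul. pose proof (Cexpi_taylor th t n). pose proof (Rabs_pow_div_fact_le k h (S n)).
  pose proof (Cmod_ge0 (a k)). unfold weight. fold t in H0. nra.
Qed.

Lemma mask_symbol_taylor x h n :
  Cmod (Csub (f (x + h)) (Cpsum (fun m => Cmul (RtoC (h ^ m)) (taylor_coef x m)) (S n)))
  <= 2 * (rho * Rabs h) ^ S n * l.
Proof.
  assert (HP : Cseries (fun k => Cpsum (fun m => Cmul (RtoC (h ^ m)) (taylor_term x m k)) (S n))
                       (Cpsum (fun m => Cmul (RtoC (h ^ m)) (taylor_coef x m)) (S n))).
  { apply (Cseries_Cpsum (fun k m => Cmul (RtoC (h ^ m)) (taylor_term x m k))). intro m.
    apply Cseries_scal, taylor_coef_spec. }
  apply (Cseries_dominated_le _ (fun k => 2 * (rho * Rabs h) ^ S n * weight k) _ _ (mask_term_taylor x h n)).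
  - apply infinite_sum_scal, weights_sum.
  - apply (Cseries_sub _ _ _ _ (mask_symbol_spec (x + h)) HP).
Qed.

Lemma mask_symbol_lipschitz x h : Cmod (Csub (f (x + h)) (f x)) <= 2 * rho * l * Rabs h.
Proof.
  pose proof (mask_symbol_taylor x h 0) as H. simpl Cpsum in H. rewrite taylor_coef_0 in H.
  replace (Cadd C0 (Cmul (RtoC 1) (f x))) with (f x) in H by Cplx_ring.
  replace (2 * rho * l * Rabs h) with (2 * (rho * Rabs h) ^ 1 * l) by ring. exact H.
Qed.

Lemma mask_symbol_near_integer y (m : Z) : Cmod (f 0) - 2 * rho * l * Rabs (y - IZR m) <= Cmod (f y).
Proof.
  pose proof (mask_symbol_lipschitz (IZR m) (y - IZR m)) as H.
  replace (IZR m + (y - IZR m)) with y in H by ring.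
  assert (Hm : f (IZR m) = f 0) by (rewrite <- (Rplus_0_l (IZR m)); apply mask_symbol_periodic).
  rewrite Hm, Cmod_sub_sym in H.
  pose proof (Cmod_sub_ge (f 0) (f y)). lra.
Qed.

Definition flat x := forall m, taylor_coef x m = C0.

Lemma mask_symbol_zero_near_flat x h : flat x -> rho * Rabs h < 1 -> f (x + h) = C0.
Proof.
  intros Hflat Hh. apply Cmod_eq0. pose proof weights_sum_ge0 as Hl.
  assert (Hq : 0 <= rho * Rabs h) by (apply Rmult_le_pos; [left; apply rho_pos|apply Rabs_pos]).
  apply Rle_antisym; [|apply Cmod_ge0]. apply Rnot_lt_le. intro Hpos.
  destruct (pow_lt_1_zero (rho * Rabs h) ltac:(rewrite Rabs_right; lra) (Cmod (f (x + h)) / (2 * l + 1)))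
    as [N HN]; [apply Rdiv_lt_0_compat; lra|].
  specialize (HN (S N) ltac:(lia)). rewrite Rabs_right in HN by (apply Rle_ge, pow_le; lra).
  pose proof (mask_symbol_taylor x h N) as H.
  rewrite Cpsum_zero in H by (intros j _; rewrite Hflat; Cplx_ring).
  replace (Csub (f (x + h)) C0) with (f (x + h)) in H by ring.
  apply Rmult_lt_compat_r with (r := 2 * l + 1) in HN; [|lra].
  replace (Cmod (f (x + h)) / (2 * l + 1) * (2 * l + 1)) with (Cmod (f (x + h))) in HN by (field; lra).
  pose proof (pow_le _ (S N) Hq). nra.
Qed.

Lemma mask_symbol_nonzero_near x m0 :
  taylor_coef x m0 <> C0 -> (forall j, (j < m0)%nat -> taylor_coef x j = C0) ->
  exists eps, eps > 0 /\ forall h, 0 < Rabs h < eps -> f (x + h) <> C0.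
Proof.
  intros Hm Hj. set (c := Cmod (taylor_coef x m0)). pose proof (Cmod_gt0 _ Hm) as Hc. fold c in Hc.
  set (D := 2 * rho ^ S m0 * l).
  assert (HD : 0 <= D).
  { unfold D. pose proof weights_sum_ge0. pose proof (pow_le rho (S m0) (Rlt_le _ _ rho_pos)). nra. }
  exists (c / (D + 1)). split; [apply Rdiv_lt_0_compat; lra|].
  intros h [Hh1 Hh2] Hzero. pose proof (mask_symbol_taylor x h m0) as H.
  simpl Cpsum in H. rewrite Cpsum_zero in H by (intros j Hj'; rewrite Hj; auto; Cplx_ring).
  rewrite Hzero in H.
  replace (Csub C0 (Cadd C0 (Cmul (RtoC (h ^ m0)) (taylor_coef x m0))))
    with (Copp (Cmul (RtoC (h ^ m0)) (taylor_coef x m0))) in H by ring.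
  rewrite Cmod_opp, Cmod_mul, Cmod_RtoC, <- RPow_abs, Rpow_mult_distr in H. fold c in H.
  simpl (Rabs h ^ S m0) in H.
  assert (Hp : 0 < Rabs h ^ m0) by (apply pow_lt; lra).
  assert (D * Rabs h < c).
  { apply Rmult_lt_compat_l with (r := D + 1) in Hh2; [|lra].
    replace ((D + 1) * (c / (D + 1))) with c in Hh2 by (field; lra). nra. }
  unfold D in *. nra.
Qed.

Lemma mask_symbol_isolated_of_not_flat x : ~ flat x ->
  exists eps, eps > 0 /\ forall h, 0 < Rabs h < eps -> f (x + h) <> C0.
Proof.
  intro Hx. apply not_all_ex_not in Hx.
  destruct (dec_inh_nat_subset_has_unique_least_element (fun m => taylor_coef x m <> C0)
              (fun m => classic _) Hx) as [m0 [[Hm0 Hmin] _]].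
  apply (mask_symbol_nonzero_near x m0 Hm0). intros j Hj. apply NNPP. intro Hne.
  specialize (Hmin j Hne). lia.
Qed.

Lemma flat_step x d : flat x -> Rabs d <= / rho / 2 -> flat (x + d).
Proof.
  intros Hflat Hd. apply NNPP. intro Hn.
  destruct (mask_symbol_isolated_of_not_flat (x + d) Hn) as [eps [He Hb]].
  pose proof rho_pos.
  assert (Hr : 0 < / rho / 2) by (apply Rdiv_lt_0_compat; [apply Rinv_0_lt_compat|]; lra).
  set (h := Rmin eps (/ rho / 2) / 2).
  assert (Hh : 0 < h) by (unfold h; apply Rdiv_lt_0_compat; [apply Rmin_pos|]; lra).
  assert (Hh2 : h < eps) by (unfold h; pose proof (Rmin_l eps (/ rho / 2)); lra).
  assert (Hh3 : h <= / rho / 4) by (unfold h; pose proof (Rmin_r eps (/ rho / 2)); lra).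
  apply (Hb h); [rewrite Rabs_right; lra|].
  replace (x + d + h) with (x + (d + h)) by ring. apply mask_symbol_zero_near_flat; auto.
  pose proof (Rabs_triang d h). rewrite (Rabs_right h) in H0 by lra.
  apply Rle_lt_trans with (rho * (/ rho / 2 + / rho / 4)).
  - apply Rmult_le_compat_l; lra.
  - field_simplify; lra.
Qed.

Lemma flat_spread x : flat x -> forall N d, Rabs d <= INR N * (/ rho / 2) -> flat (x + d).
Proof.
  intros Hflat N. induction N as [|N IH]; intros d Hd.
  - simpl in Hd.
    replace d with 0 by (destruct (Req_dec d 0) as [E|E]; [auto|pose proof (Rabs_pos_lt d E); lra]).
    rewrite Rplus_0_r. exact Hflat.
  - rewrite S_INR in Hd. pose proof (pos_INR N) as HN. pose proof (Rabs_pos d).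
    replace (x + d) with (x + d * INR N / (INR N + 1) + d / (INR N + 1)) by (field; lra).
    apply flat_step.
    + apply IH. unfold Rdiv.
      rewrite !Rabs_mult, Rabs_inv, (Rabs_right (INR N)), (Rabs_right (INR N + 1)) by lra.
      apply (Rmult_le_reg_r (INR N + 1)); [lra|]. rewrite Rmult_assoc, Rinv_l by lra. nra.
    + unfold Rdiv. rewrite Rabs_mult, Rabs_inv, (Rabs_right (INR N + 1)) by lra.
      apply (Rmult_le_reg_r (INR N + 1)); [lra|]. rewrite Rmult_assoc, Rinv_l by lra. nra.
Qed.

Lemma not_flat x : f 0 <> C0 -> ~ flat x.
Proof.
  intros H0 Hflat. pose proof rho_pos.
  assert (Hr : 0 < / rho / 2) by (apply Rdiv_lt_0_compat; [apply Rinv_0_lt_compat|]; lra).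
  destruct (INR_archimed (/ rho / 2) (Rabs x) Hr) as [N HN].
  apply H0. rewrite <- taylor_coef_0.
  replace 0 with (x + - x) by ring. apply (flat_spread x Hflat N). rewrite Rabs_Ropp. lra.
Qed.

Lemma mask_symbol_zeros_mod1 : f 0 <> C0 ->
  exists Zl : list R, forall y, f y = C0 -> exists z m, In z Zl /\ y = z + IZR m.
Proof.
  intros H0.
  destruct (isolated_points_finite_01 (fun y => f y = C0)) as [Zl HZ].
  { intro x. destruct (mask_symbol_isolated_of_not_flat x (not_flat x H0)) as [eps [He Hb]].
    exists eps. split; auto. }
  exists Zl. intros y Hy. destruct (archimed y) as [H1 H2].
  exists (y - IZR (up y - 1)), (up y - 1)%Z. split; [|ring].
  apply HZ; [rewrite minus_IZR; lra|].
  replace (y - IZR (up y - 1)) with (y + IZR (- (up y - 1))) by (rewrite opp_IZR; ring).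
  rewrite mask_symbol_periodic. auto.
Qed.

End MaskSymbol.

(** * Linear recurrences with characteristic roots in the unit disc *)

(** A list [l = [c_0; ...; c_(n-1)]] stands for the monic polynomial
    [X^n + c_(n-1) X^(n-1) + ... + c_0] and for the recurrence
    [w(k+n) + c_(n-1) w(k+n-1) + ... + c_0 w(k) = 0]. *)
Fixpoint monic_eval (l : list Cplx) (x : Cplx) : Cplx :=
  match l with nil => Cone | c :: l' => Cadd c (Cmul x (monic_eval l' x)) end.

Fixpoint monic_recurrence (l : list Cplx) (w : nat -> Cplx) (k : nat) : Cplx :=
  match l with nil => w k | c :: l' => Cadd (Cmul c (w k)) (monic_recurrence l' w (S k)) end.

(** Quotient by [X - z] (synthetic division); it is again monic. *)
Fixpoint monic_div_linear (z : Cplx) (l : list Cplx) : list Cplx :=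
  match l with
  | nil => nil
  | c :: l' => match l' with nil => nil | _ => monic_eval l' z :: monic_div_linear z l' end
  end.

Fixpoint monic_deriv_eval (l : list Cplx) (x : Cplx) : Cplx :=
  match l with nil => C0 | c :: l' => Cadd (monic_eval l' x) (Cmul x (monic_deriv_eval l' x)) end.

Module FTA.
Import ssreflect ssrbool ssrfun eqtype ssrnat seq fintype bigop ssralg ssrnum Rstruct complex.
Import GRing.Theory.
Local Open Scope ring_scope.
Local Open Scope complex_scope.

Definition to_Ri (z : Cplx) : R[i] := (Defs.Re z +i* Defs.Im z).
Definition of_Ri (w : R[i]) : Cplx := mkC (complex.Re w) (complex.Im w).

Lemma of_Ri_to_Ri z : of_Ri (to_Ri z) = z.
Proof. by case: z. Qed.

Lemma of_Ri_add x y : of_Ri (x + y) = Cadd (of_Ri x) (of_Ri y).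
Proof. by case: x => a b; case: y. Qed.

Lemma of_Ri_mul x y : of_Ri (x * y) = Cmul (of_Ri x) (of_Ri y).
Proof. by case: x => a b; case: y. Qed.

Definition monic_eval_Ri (l : seq R[i]) (x : R[i]) := foldr (fun c acc => c + x * acc) 1 l.

Lemma monic_eval_RiE l x : monic_eval_Ri l x = x ^+ size l + \sum_(i < size l) l`_i * x ^+ i.
Proof.
  elim: l => [|c l IH] /=; first by rewrite big_ord0 expr0 addr0.
  rewrite IH big_ord_recl /= expr0 mulr1 mulrDr exprS mulr_sumr addrCA.
  congr (_ + _). congr (_ + _). apply: eq_bigr => i _. by rewrite /bump /= add0n add1n exprS mulrCA.
Qed.

Lemma of_Ri_monic_eval l x : of_Ri (monic_eval_Ri (map to_Ri l) x) = monic_eval l (of_Ri x).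
Proof. elim: l => [|c l IH] //=. by rewrite of_Ri_add of_Ri_mul IH of_Ri_to_Ri. Qed.

Lemma monic_eval_has_root (l : list Cplx) : l <> nil -> exists z, monic_eval l z = C0.
Proof.
  move=> Hl. set m := map to_Ri l.
  have Hm : (0 < size m)%N by rewrite size_map; case: l Hl {m}.
  have [x Hx] := complex_acf_axiom (fun i => - m`_i) Hm.
  exists (of_Ri x). rewrite -of_Ri_monic_eval monic_eval_RiE Hx -big_split /= big1 //.
  by move=> i _; rewrite mulNr addNr.
Qed.
End FTA.

Lemma monic_eval_div_linear l z x : l <> nil ->
  monic_eval l x = Cadd (monic_eval l z) (Cmul (Csub x z) (monic_eval (monic_div_linear z l) x)).
Proof.
  induction l as [|c l IH]; intros H; [congruence|].
  destruct l as [|c' l'']; [simpl; Cplx_ring|].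
  change (monic_div_linear z (c :: c' :: l''))
    with (monic_eval (c' :: l'') z :: monic_div_linear z (c' :: l'')).
  change (monic_eval (c :: c' :: l'') x) with (Cadd c (Cmul x (monic_eval (c' :: l'') x))).
  change (monic_eval (c :: c' :: l'') z) with (Cadd c (Cmul z (monic_eval (c' :: l'') z))).
  rewrite (IH ltac:(discriminate)). cbn [monic_eval]. ring.
Qed.

Lemma monic_recurrence_div_linear l z w k : l <> nil ->
  monic_recurrence l w k = Cadd (Cmul (monic_eval l z) (w k))
    (monic_recurrence (monic_div_linear z l) (fun j => Csub (w (S j)) (Cmul z (w j))) k).
Proof.
  revert k. induction l as [|c l IH]; intros k H; [congruence|].
  destruct l as [|c' l'']; [simpl; Cplx_ring|].
  change (monic_div_linear z (c :: c' :: l''))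
    with (monic_eval (c' :: l'') z :: monic_div_linear z (c' :: l'')).
  change (monic_recurrence (c :: c' :: l'') w k)
    with (Cadd (Cmul c (w k)) (monic_recurrence (c' :: l'') w (S k))).
  rewrite (IH (S k) ltac:(discriminate)). cbn [monic_recurrence monic_eval]. ring.
Qed.

Lemma length_monic_div_linear z l : length (monic_div_linear z l) = pred (length l).
Proof. induction l as [|c l IH]; simpl; auto. destruct l; simpl in *; auto. Qed.

Lemma monic_eval_div_linear_root l z : l <> nil ->
  monic_eval (monic_div_linear z l) z = monic_deriv_eval l z.
Proof.
  induction l as [|c l IH]; intros H; [congruence|].
  destruct l as [|c' l'']; [simpl; Cplx_ring|].
  change (monic_div_linear z (c :: c' :: l''))
    with (monic_eval (c' :: l'') z :: monic_div_linear z (c' :: l'')).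
  cbn [monic_eval]. rewrite (IH ltac:(discriminate)). reflexivity.
Qed.

Lemma geometric_decay_first_order (K' th' : R) (w : nat -> Cplx) (z : Cplx) :
  Cmod z < 1 -> 0 <= th' < 1 -> 0 <= K' ->
  (forall k, Cmod (Csub (w (S k)) (Cmul z (w k))) <= K' * th' ^ k) ->
  exists K th, 0 <= th < 1 /\ 0 <= K /\ forall k, Cmod (w k) <= K * th ^ k.
Proof.
  intros Hz Hth HK Hw. set (c := Cmod z). pose proof (Cmod_ge0 z).
  set (th := Rmax ((c + 1) / 2) th').
  assert (Hth1 : (c + 1) / 2 <= th) by apply Rmax_l.
  assert (Hth2 : th' <= th) by apply Rmax_r.
  assert (Hth3 : th < 1) by (unfold th, Rmax; destruct (Rle_dec _ _); unfold c in *; lra).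
  set (K := Rmax (Cmod (w O)) (K' / (th - c))).
  assert (HK1 : Cmod (w O) <= K) by apply Rmax_l.
  assert (HK2 : K' / (th - c) <= K) by apply Rmax_r.
  assert (Hd : 0 < th - c) by (unfold c in *; lra).
  assert (HKK : K' <= K * (th - c)).
  { apply Rmult_le_compat_r with (r := th - c) in HK2; [|lra].
    replace (K' / (th - c) * (th - c)) with K' in HK2 by (field; lra). lra. }
  exists K, th. split; [unfold c in *; lra|]. split; [pose proof (Cmod_ge0 (w O)); lra|].
  induction k; [simpl; lra|].
  replace (w (S k)) with (Cadd (Cmul z (w k)) (Csub (w (S k)) (Cmul z (w k)))) by ring.
  eapply Rle_trans; [apply Cmod_triangle|]. rewrite Cmod_mul. fold c.
  specialize (Hw k). assert (th' ^ k <= th ^ k) by (apply pow_incr; lra).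
  assert (0 <= th ^ k) by (apply pow_le; unfold c in *; lra).
  assert (c * Cmod (w k) <= c * (K * th ^ k)) by (apply Rmult_le_compat_l; auto).
  simpl. nra.
Qed.

Lemma recurrence_geometric_decay l :
  (forall x, monic_eval l x = C0 -> Cmod x < 1) ->
  forall w, (forall k, monic_recurrence l w k = C0) ->
  exists K th, 0 <= th < 1 /\ 0 <= K /\ forall k, Cmod (w k) <= K * th ^ k.
Proof.
  remember (length l) as n eqn:Hlen. revert l Hlen.
  induction n; intros l Hlen Hroots w Hw.
  - destruct l; [|discriminate]. exists 0, 0. repeat split; try lra.
    intro k. simpl in Hw. rewrite Hw, Cmod_C0. lra.
  - assert (Hl : l <> nil) by (intro; subst; discriminate).
    destruct (FTA.monic_eval_has_root l Hl) as [z Hz].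
    set (w' := fun k => Csub (w (S k)) (Cmul z (w k))).
    destruct (IHn (monic_div_linear z l)) with (w := w') as [K' [th' [Hth' [HK' Hb]]]].
    + rewrite length_monic_div_linear, <- Hlen. auto.
    + intros x Hx. apply Hroots. rewrite (monic_eval_div_linear l z x Hl), Hz, Hx. ring.
    + intro k. pose proof (monic_recurrence_div_linear l z w k Hl) as E.
      rewrite Hw, Hz in E. fold w' in E.
      set (q := monic_div_linear z l) in *.
      replace (monic_recurrence q w' k)
        with (Csub (Cadd (Cmul C0 (w k)) (monic_recurrence q w' k)) (Cmul C0 (w k))) by ring.
      rewrite <- E. Cplx_ring.
    + apply (geometric_decay_first_order K' th' w z); auto.
Qed.

(** * Integer linear recurrences *)

Fixpoint Zpoly_evalR (P : list Z) (x : R) : R :=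
  match P with nil => 0 | c :: P' => IZR c + x * Zpoly_evalR P' x end.

Fixpoint Zpoly_deriv_evalR (P : list Z) (x : R) : R :=
  match P with nil => 0 | c :: P' => Zpoly_evalR P' x + x * Zpoly_deriv_evalR P' x end.

(** [Zpoly_scaled_coefs k [c_0; c_1; ...] = [k c_0; (k+1) c_1; ...]]; with [k = 1] applied
    to [P = c :: P'] these are the coefficients of [P']. *)
Fixpoint Zpoly_scaled_coefs (k : nat) (l : list Z) : list Z :=
  match l with nil => nil | c :: l' => (Z.of_nat k * c)%Z :: Zpoly_scaled_coefs (S k) l' end.

Definition CZ (c : Z) : Cplx := RtoC (IZR c).

Fixpoint Zrecurrence (l : list Z) (u : nat -> Z) (n : nat) : Z :=
  match l with nil => u n | c :: l' => (c * u n + Zrecurrence l' u (S n))%Z end.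

Lemma Zpoly_evalC_RtoC P x : Zpoly_evalC P (RtoC x) = RtoC (Zpoly_evalR P x).
Proof. induction P; simpl; [auto|]. rewrite IHP. Cplx_ring. Qed.

Lemma Qpoly_evalR_inject_Z P x : Qpoly_evalR (map inject_Z P) x = Zpoly_evalR P x.
Proof.
  induction P; simpl; auto. rewrite IHP. f_equal. unfold Q2R, inject_Z; simpl. field.
Qed.

Lemma monic_eval_CZ l x : monic_eval (map CZ l) x = Zpoly_evalC (l ++ 1%Z :: nil) x.
Proof. induction l; simpl; [Cplx_ring|]. rewrite IHl. auto. Qed.

Lemma monic_deriv_eval_CZ l x :
  monic_deriv_eval (map CZ l) (RtoC x) = RtoC (Zpoly_deriv_evalR (l ++ 1%Z :: nil) x).
Proof.
  induction l; simpl; [Cplx_ring|].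
  rewrite IHl, monic_eval_CZ, Zpoly_evalC_RtoC. Cplx_ring.
Qed.

Lemma monic_recurrence_CZ l u n :
  monic_recurrence (map CZ l) (fun k => CZ (u k)) n = CZ (Zrecurrence l u n).
Proof.
  revert n; induction l; intro n; simpl; auto. rewrite IHl. unfold CZ.
  rewrite plus_IZR, mult_IZR. Cplx_ring.
Qed.

Lemma Zpoly_evalR_scaled_coefs l x k :
  Zpoly_evalR (Zpoly_scaled_coefs (S k) l) x = INR k * Zpoly_evalR l x + Zpoly_deriv_evalR (0%Z :: l) x.
Proof.
  revert k. induction l as [|c l IH]; intro k;
    cbn [Zpoly_scaled_coefs Zpoly_evalR Zpoly_deriv_evalR]; [ring|].
  rewrite IH, mult_IZR, <- INR_IZR_INZ. cbn [Zpoly_deriv_evalR Zpoly_evalR]. rewrite !S_INR. ring.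
Qed.

Lemma nth_Zpoly_scaled_coefs l k i :
  nth i (Zpoly_scaled_coefs k l) 0%Z = (Z.of_nat (k + i) * nth i l 0)%Z.
Proof.
  revert k i. induction l as [|c l IH]; intros k i; destruct i; simpl; auto; try lia.
  rewrite IH. do 2 f_equal. lia.
Qed.

Lemma length_Zpoly_scaled_coefs l k : length (Zpoly_scaled_coefs k l) = length l.
Proof. revert k; induction l; simpl; auto. Qed.

Lemma Zrecurrence_eventually_zero_tail l u n :
  (forall m, (n <= m)%nat -> u m = 0%Z) -> Zrecurrence l u n = 0%Z.
Proof.
  revert n; induction l; intros n H; simpl; [apply H; lia|].
  rewrite H by lia. rewrite IHl by (intros; apply H; lia). lia.
Qed.

(** A recurrence with nonzero constant coefficient runs backwards. *)
Lemma Zrecurrence_eventually_zero c0 l u : c0 <> 0%Z -> (forall n, Zrecurrence (c0 :: l) u n = 0%Z) ->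
  (exists N, forall n, (N <= n)%nat -> u n = 0%Z) -> forall n, u n = 0%Z.
Proof.
  intros Hc Hrec [N HN].
  assert (H : forall j n, (N - j <= n)%nat -> u n = 0%Z).
  { induction j; intros n Hn; [apply HN; lia|].
    destruct (Nat.le_gt_cases (N - j) n); [apply IHj; auto|].
    specialize (Hrec n). simpl in Hrec.
    rewrite (Zrecurrence_eventually_zero_tail l u (S n)) in Hrec by (intros; apply IHj; lia).
    assert (E : (c0 * u n = 0)%Z) by lia. apply Z.mul_eq_0 in E. destruct E; [congruence|auto]. }
  intro n. apply (H N n). lia.
Qed.

Lemma Zrecurrence_lin l u v p q n :
  Zrecurrence l (fun k => (p * u k + q * v k)%Z) n = (p * Zrecurrence l u n + q * Zrecurrence l v n)%Z.
Proof. revert n; induction l; intro n; simpl; auto. rewrite IHl. ring. Qed.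

Lemma Zrecurrence_shift l u m n : Zrecurrence l (fun k => u (k + m)%nat) n = Zrecurrence l u (n + m).
Proof. revert n; induction l; intro n; simpl; auto. rewrite IHl. auto. Qed.

Lemma geometric_eventually_lt K th eps : 0 <= th < 1 -> 0 <= K -> 0 < eps ->
  exists N, forall n, (N <= n)%nat -> K * th ^ n < eps.
Proof.
  intros Hth HK He.
  destruct (pow_lt_1_zero th ltac:(rewrite Rabs_right; lra) (eps / (K + 1))) as [N HN];
    [apply Rdiv_lt_0_compat; lra|].
  exists N. intros n Hn. specialize (HN n Hn). rewrite Rabs_right in HN by (apply Rle_ge, pow_le; lra).
  apply Rmult_lt_compat_l with (r := K + 1) in HN; [|lra].
  replace ((K + 1) * (eps / (K + 1))) with eps in HN by (field; lra).
  pose proof (pow_le th n (proj1 Hth)). nra.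
Qed.

Lemma Z_geometric_decay_eventually_zero (u : nat -> Z) K th : 0 <= th < 1 -> 0 <= K ->
  (forall n, Rabs (IZR (u n)) <= K * th ^ n) -> exists N, forall n, (N <= n)%nat -> u n = 0%Z.
Proof.
  intros Hth HK Hb. destruct (geometric_eventually_lt K th 1 Hth HK Rlt_0_1) as [N HN].
  exists N. intros n Hn. specialize (HN n Hn). specialize (Hb n).
  assert (Habs : (Z.abs (u n) < 1)%Z) by (apply lt_IZR; rewrite abs_IZR; lra). lia.
Qed.

Lemma geometric_cauchy_limit (r : nat -> R) M rh : 0 <= rh < 1 -> 0 <= M ->
  (forall n, Rabs (r (S n) - r n) <= M * rh ^ n) ->
  exists c, forall n, Rabs (c - r n) <= M * rh ^ n / (1 - rh).
Proof.
  intros Hrh HM Hs.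
  assert (Hb : forall n j, Rabs (r (j + n)%nat - r n) <= M * rh ^ n / (1 - rh)).
  { intros n j. eapply Rle_trans; [|apply (Rpsum_geom_le (M * rh ^ n) rh j); auto].
    2: apply Rmult_le_pos; [lra|apply pow_le; lra].
    induction j; simpl; [rewrite Rminus_diag, Rabs_R0; lra|].
    replace (r (S (j + n)) - r n) with ((r (S (j + n)) - r (j + n)%nat) + (r (j + n)%nat - r n)) by ring.
    eapply Rle_trans; [apply Rabs_triang|]. specialize (Hs (j + n)%nat). rewrite pow_add in Hs.
    replace (M * rh ^ n * rh ^ j) with (M * (rh ^ j * rh ^ n)) by ring. lra. }
  assert (Hc : Cauchy_crit r).
  { intros eps He.
    destruct (geometric_eventually_lt (M / (1 - rh)) rh eps Hrh) as [N HN]; auto.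
    { apply Rmult_le_pos; [lra|left; apply Rinv_0_lt_compat; lra]. }
    assert (Hgen : forall n m, (N <= n)%nat -> (n <= m)%nat -> Rabs (r m - r n) < eps).
    { intros n m Hn Hnm. replace m with ((m - n) + n)%nat by lia.
      eapply Rle_lt_trans; [apply Hb|]. specialize (HN n Hn). unfold Rdiv in *. lra. }
    exists N. intros n m Hn Hm. unfold R_dist.
    destruct (Nat.le_gt_cases n m); [rewrite Rabs_minus_sym; apply Hgen; auto|apply Hgen; auto; lia]. }
  destruct (R_complete r Hc) as [c Hcv]. exists c. intro n.
  apply Rnot_lt_le. intro H. set (g := Rabs (c - r n) - M * rh ^ n / (1 - rh)).
  destruct (Hcv g) as [N HN]; [unfold g; lra|].
  specialize (HN (N + n)%nat ltac:(lia)). specialize (Hb n N). unfold R_dist in HN.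
  pose proof (Rabs_triang (c - r (N + n)%nat) (r (N + n)%nat - r n)) as T.
  replace (c - r (N + n)%nat + (r (N + n)%nat - r n)) with (c - r n) in T by ring.
  rewrite Rabs_minus_sym in HN. unfold g in HN. lra.
Qed.

Fixpoint dotZ (l s : list Z) : Z :=
  match l, s with c :: l', x :: s' => (c * x + dotZ l' s')%Z | _, _ => 0%Z end.

Lemma Zrecurrence_dotZ u l s n : length s = length l ->
  (forall i, (i < length l)%nat -> nth i s 0%Z = u (n + i)%nat) ->
  Zrecurrence l u n = (dotZ l s + u (n + length l)%nat)%Z.
Proof.
  revert s n. induction l as [|c l IH]; intros s n Hs Hn; simpl; [rewrite Nat.add_0_r; auto|].
  destruct s as [|x s]; [discriminate|]. simpl in Hs.
  rewrite (IH s (S n)); auto.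
  - specialize (Hn O ltac:(simpl; lia)). simpl in Hn. rewrite Nat.add_0_r in Hn. subst x.
    replace (S n + length l)%nat with (n + S (length l))%nat by lia. ring.
  - intros i Hi. specialize (Hn (S i) ltac:(simpl; lia)). simpl in Hn. rewrite Hn. f_equal. lia.
Qed.

(** * Arithmetic of a PV number *)

Lemma pow_le_pow_decr x m n : 0 <= x <= 1 -> (m <= n)%nat -> x ^ n <= x ^ m.
Proof.
  intros H Hmn. replace n with (m + (n - m))%nat by lia. rewrite pow_add.
  pose proof (pow_le x m (proj1 H)). pose proof (pow_le x (n - m) (proj1 H)).
  assert (x ^ (n - m) <= 1) by (rewrite <- (pow1 (n - m)); apply pow_incr; lra). nra.
Qed.

(** The relation with [|q| <= |p|] makes [|e|] nondecreasing along [n + k m]. *)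
Lemma shift_relation_geometric_decay_zero (e : nat -> R) m B th (p q : R) : (1 <= m)%nat ->
  0 <= th < 1 -> 0 <= B -> 0 < Rabs p -> Rabs q <= Rabs p ->
  (forall n, q * e (n + m)%nat = p * e n) -> (forall n, Rabs (e n) <= B * th ^ n) -> forall n, e n = 0.
Proof.
  intros Hm Hth HB Hp Hqp Hrel Hdecay n.
  assert (Hmono : forall n, Rabs (e n) <= Rabs (e (n + m)%nat)).
  { intro k. apply (Rmult_le_reg_l (Rabs p)); auto.
    rewrite <- Rabs_mult, <- Hrel, Rabs_mult. apply Rmult_le_compat_r; auto. apply Rabs_pos. }
  assert (Hk : forall k, Rabs (e n) <= B * th ^ k).
  { intro k. apply Rle_trans with (Rabs (e (n + k * m)%nat)).
    - induction k; [rewrite Nat.add_0_r; lra|].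
      eapply Rle_trans; [apply IHk|]. replace (n + S k * m)%nat with (n + k * m + m)%nat by lia. apply Hmono.
    - eapply Rle_trans; [apply Hdecay|]. apply Rmult_le_compat_l; auto. apply pow_le_pow_decr; [lra|nia]. }
  apply NNPP. intro Hne. pose proof (Rabs_pos_lt _ Hne) as Hpos.
  destruct (geometric_eventually_lt B th (Rabs (e n)) Hth HB Hpos) as [N HN].
  specialize (HN N (le_n _)). specialize (Hk N). lra.
Qed.

Section PV.

Variables (alpha : R) (d : nat) (P : list Z).
Hypothesis d_ge2 : (2 <= d)%nat.
Hypothesis P_length : length P = S d.
Hypothesis P_lead : nth d P 0%Z = 1%Z.
Hypothesis P_root : Zpoly_evalC P (RtoC alpha) = C0.
Hypothesis P_minimal : forall Qp : list Q, (length Qp <= d)%nat -> Qpoly_evalR Qp alpha = 0 ->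
  forall i, Qeq (nth i Qp 0%Q) 0%Q.
Hypothesis P_conjugates : forall z : Cplx, Zpoly_evalC P z = C0 -> z <> RtoC alpha -> Cmod z < 1.

Definition low_coefs := firstn d P.

Lemma length_low_coefs : length low_coefs = d.
Proof. unfold low_coefs. apply firstn_length_le. lia. Qed.

Lemma P_low_coefs : P = low_coefs ++ 1%Z :: nil.
Proof.
  pose proof (firstn_skipn d P) as E. unfold low_coefs.
  assert (Hs : length (skipn d P) = 1%nat) by (rewrite length_skipn; lia).
  destruct (skipn d P) as [|x [|y r]] eqn:Es; simpl in Hs; try lia.
  assert (Hx : x = 1%Z).
  { rewrite <- P_lead, <- E, app_nth2; rewrite firstn_length_le by lia; [|lia].
    rewrite Nat.sub_diag. auto. }
  subst x. auto.
Qed.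

Lemma Zpoly_minimal L : (length L <= d)%nat -> Zpoly_evalR L alpha = 0 -> forall i, nth i L 0%Z = 0%Z.
Proof.
  intros HL HZ i. pose proof (P_minimal (map inject_Z L)) as H.
  rewrite length_map, Qpoly_evalR_inject_Z in H. specialize (H HL HZ i).
  change 0%Q with (inject_Z 0) in H. rewrite map_nth in H. unfold Qeq in H. simpl in H. lia.
Qed.

Lemma alpha_irrational p q : q <> 0%Z -> IZR q * alpha <> IZR p.
Proof.
  intros Hq E. pose proof (Zpoly_minimal ((- p)%Z :: q :: nil)) as H. simpl in H.
  rewrite opp_IZR in H. specialize (H ltac:(lia) ltac:(lra) 1%nat). simpl in H. auto.
Qed.

Lemma alpha_neq0 : alpha <> 0.
Proof. intro E. apply (alpha_irrational 0 1); [lia|]. rewrite E. simpl. ring. Qed.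

Lemma low_coefs_head : exists c0 l', low_coefs = c0 :: l' /\ c0 <> 0%Z.
Proof.
  pose proof length_low_coefs as Hl.
  destruct low_coefs as [|c0 l'] eqn:E; [simpl in Hl; lia|]. exists c0, l'. split; auto. intro Hc. subst c0.
  pose proof P_root as HP. rewrite Zpoly_evalC_RtoC, P_low_coefs, E in HP. apply RtoC_inj in HP. simpl in HP.
  assert (HZ : Zpoly_evalR (l' ++ 1%Z :: nil) alpha = 0).
  { destruct (Rmult_integral alpha (Zpoly_evalR (l' ++ 1%Z :: nil) alpha)) as [H|H]; auto; [lra|].
    exfalso; apply alpha_neq0; auto. }
  simpl in Hl. pose proof (Zpoly_minimal (l' ++ 1%Z :: nil)) as Hm.
  rewrite length_app in Hm. simpl in Hm. specialize (Hm ltac:(lia) HZ (length l')).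
  rewrite nth_middle in Hm. discriminate.
Qed.

Definition P_monic := map CZ low_coefs.

Lemma monic_eval_P_monic x : monic_eval P_monic x = Zpoly_evalC P x.
Proof. unfold P_monic. rewrite monic_eval_CZ, <- P_low_coefs. auto. Qed.

Lemma P_monic_neq_nil : P_monic <> nil.
Proof.
  unfold P_monic. intro E. apply (f_equal (@length _)) in E.
  rewrite length_map, length_low_coefs in E. simpl in E. lia.
Qed.

(** [P'(alpha) <> 0], since [P'] has degree [d - 1] and leading coefficient [d]. *)
Lemma alpha_simple_root : monic_deriv_eval P_monic (RtoC alpha) <> C0.
Proof.
  unfold P_monic. rewrite monic_deriv_eval_CZ, <- P_low_coefs. intro E. apply RtoC_inj in E.
  assert (HP : exists c Pt, P = c :: Pt) by (destruct P as [|c Pt]; [simpl in P_length; lia|eauto]).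
  destruct HP as [c [Pt EP]]. rewrite EP in E. simpl in E.
  assert (HPt : length Pt = d) by (rewrite EP in P_length; simpl in P_length; lia).
  pose proof (Zpoly_minimal (Zpoly_scaled_coefs 1 Pt)) as Hm. rewrite length_Zpoly_scaled_coefs in Hm.
  rewrite Zpoly_evalR_scaled_coefs in Hm. simpl in Hm.
  specialize (Hm ltac:(lia) ltac:(lra) (pred d)). rewrite nth_Zpoly_scaled_coefs in Hm.
  replace (nth (pred d) Pt 0%Z) with 1%Z in Hm; [lia|].
  rewrite <- P_lead, EP. destruct d; [lia|]. auto.
Qed.

(** [P / (X - alpha)], whose roots are the conjugates of [alpha]. *)
Definition conj_factor := monic_div_linear (RtoC alpha) P_monic.

Lemma conj_factor_roots x : monic_eval conj_factor x = C0 -> Cmod x < 1.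
Proof.
  intro Hx. assert (HP : Zpoly_evalC P x = C0).
  { rewrite <- monic_eval_P_monic, (monic_eval_div_linear P_monic (RtoC alpha) x P_monic_neq_nil).
    fold conj_factor. rewrite Hx, monic_eval_P_monic, P_root. ring. }
  destruct (classic (x = RtoC alpha)) as [E|NE]; [|apply P_conjugates; auto].
  exfalso. apply alpha_simple_root. rewrite <- monic_eval_div_linear_root by apply P_monic_neq_nil.
  fold conj_factor. rewrite <- E. auto.
Qed.

(** [rec_state n = [u n; ...; u (n+d-1)]] for the recurrence [u] with characteristic polynomial
    [P] started from [0, ..., 0, 1]. *)
Fixpoint rec_state (n : nat) : list Z :=
  match n with
  | O => repeat 0%Z (pred d) ++ 1%Z :: nil
  | S m => tl (rec_state m) ++ (- dotZ low_coefs (rec_state m))%Z :: nil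
  end.

Definition rec_seq n := hd 0%Z (rec_state n).

Lemma length_rec_state n : length (rec_state n) = d.
Proof.
  induction n; simpl; [rewrite length_app, repeat_length; simpl; lia|].
  rewrite length_app. destruct (rec_state n); simpl in *; lia.
Qed.

Lemma nth_rec_state i n : (i < d)%nat -> nth i (rec_state n) 0%Z = rec_seq (n + i).
Proof.
  revert n. induction i; intros n Hi; [rewrite Nat.add_0_r; unfold rec_seq; destruct (rec_state n); auto|].
  replace (n + S i)%nat with (S n + i)%nat by lia. rewrite <- IHi by lia.
  simpl. pose proof (length_rec_state n). destruct (rec_state n) as [|x s]; simpl in *; [lia|].
  rewrite app_nth1 by lia. auto.
Qed.

Lemma rec_seq_recurrence n : Zrecurrence low_coefs rec_seq n = 0%Z.
Proof.
  rewrite (Zrecurrence_dotZ rec_seq low_coefs (rec_state n) n).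
  - rewrite length_low_coefs. replace (n + d)%nat with (S n + pred d)%nat by lia.
    rewrite <- (nth_rec_state (pred d) (S n)) by lia. simpl.
    pose proof (length_rec_state n). destruct (rec_state n) as [|x s]; simpl in *; [lia|].
    replace (pred d) with (length s) by lia. rewrite nth_middle. ring.
  - rewrite length_rec_state, length_low_coefs. auto.
  - intros i Hi. rewrite length_low_coefs in Hi. apply nth_rec_state. auto.
Qed.

Lemma rec_seq_init : rec_seq (pred d) = 1%Z.
Proof.
  replace (pred d) with (0 + pred d)%nat at 1 by lia. rewrite <- (nth_rec_state (pred d) 0) by lia. simpl.
  replace (pred d) with (length (repeat 0%Z (pred d))) at 1 by apply repeat_length. apply nth_middle.
Qed.

Lemma rec_seq_not_geometric_decay K th : 0 <= th < 1 -> 0 <= K ->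
  ~ forall n, Rabs (IZR (rec_seq n)) <= K * th ^ n.
Proof.
  intros Hth HK Hb. destruct low_coefs_head as [c0 [l' [E Hc]]].
  assert (H0 : forall n, rec_seq n = 0%Z).
  { apply (Zrecurrence_eventually_zero c0 l' rec_seq Hc).
    - intro n. rewrite <- E. apply rec_seq_recurrence.
    - apply (Z_geometric_decay_eventually_zero rec_seq K th); auto. }
  pose proof rec_seq_init as H1. rewrite H0 in H1. discriminate.
Qed.

Lemma monic_recurrence_rec_seq k : monic_recurrence P_monic (fun n => CZ (rec_seq n)) k = C0.
Proof. unfold P_monic. rewrite monic_recurrence_CZ, rec_seq_recurrence. auto. Qed.

Lemma alpha_abs_gt1 : 1 < Rabs alpha.
Proof.
  apply Rnot_le_lt. intro H. destruct (Rle_lt_or_eq_dec _ _ H) as [Hl|He].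
  - assert (Hr : forall x, monic_eval P_monic x = C0 -> Cmod x < 1).
    { intros x Hx. rewrite monic_eval_P_monic in Hx.
      destruct (classic (x = RtoC alpha)) as [E|NE]; [rewrite E, Cmod_RtoC; auto|apply P_conjugates; auto]. }
    destruct (recurrence_geometric_decay P_monic Hr _ monic_recurrence_rec_seq) as [K [th [Hth [HK Hb]]]].
    apply (rec_seq_not_geometric_decay K th Hth HK). intro n. specialize (Hb n). unfold CZ in Hb.
    rewrite Cmod_RtoC in Hb. auto.
  - destruct (Rcase_abs alpha); [rewrite Rabs_left in He by lra|rewrite Rabs_right in He by lra].
    + apply (alpha_irrational (-1) 1); [lia|]. simpl. lra.
    + apply (alpha_irrational 1 1); [lia|]. simpl. lra.
Qed.

Lemma rec_seq_step_decay : exists K th, 0 <= th < 1 /\ 0 <= K /\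
  forall k, Rabs (IZR (rec_seq (S k)) - alpha * IZR (rec_seq k)) <= K * th ^ k.
Proof.
  set (w := fun k => CZ (rec_seq k)).
  destruct (recurrence_geometric_decay conj_factor conj_factor_roots
              (fun k => Csub (w (S k)) (Cmul (RtoC alpha) (w k))))
    as [K [th [Hth [HK Hb]]]].
  - intro k. pose proof (monic_recurrence_div_linear P_monic (RtoC alpha) w k P_monic_neq_nil) as E.
    rewrite monic_recurrence_rec_seq, monic_eval_P_monic, P_root in E. fold conj_factor in E.
    set (r := monic_recurrence conj_factor _ k) in *.
    replace r with (Csub (Cadd (Cmul C0 (w k)) r) (Cmul C0 (w k))) by ring. rewrite <- E. Cplx_ring.
  - exists K, th. split; [exact Hth|split; [exact HK|]]. intro k. specialize (Hb k). unfold w, CZ in Hb.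
    rewrite Cmul_RtoC, Csub_RtoC, Cmod_RtoC in Hb. auto.
Qed.

Lemma rec_seq_approx : exists c B th, 0 <= th < 1 /\ 0 <= B /\ c <> 0 /\
  forall n, Rabs (IZR (rec_seq n) - c * alpha ^ n) <= B * th ^ n.
Proof.
  destruct rec_seq_step_decay as [K [th [Hth [HK Hb]]]].
  pose proof alpha_abs_gt1 as Ha. pose proof alpha_neq0 as Ha0. set (A := Rabs alpha) in *.
  assert (HAn : forall n, 0 < A ^ n) by (intro; apply pow_lt; lra).
  assert (Hpow : forall n, Rabs (alpha ^ n) = A ^ n) by (intro; rewrite <- RPow_abs; auto).
  set (rh := th / A).
  assert (Hrh : 0 <= rh < 1).
  { unfold rh. split; [apply Rmult_le_pos; [lra|left; apply Rinv_0_lt_compat; lra]|].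
    apply (Rmult_lt_reg_r A); [lra|]. unfold Rdiv. rewrite Rmult_assoc, Rinv_l; lra. }
  assert (Hrhn : forall n, rh ^ n = th ^ n / A ^ n).
  { intro n. unfold rh, Rdiv. rewrite Rpow_mult_distr, pow_inv. auto. }
  destruct (geometric_cauchy_limit (fun n => IZR (rec_seq n) / alpha ^ n) (K / A) rh Hrh) as [c Hc].
  { apply Rmult_le_pos; [lra|left; apply Rinv_0_lt_compat; lra]. }
  { intro n. replace (IZR (rec_seq (S n)) / alpha ^ S n - IZR (rec_seq n) / alpha ^ n) with
      ((IZR (rec_seq (S n)) - alpha * IZR (rec_seq n)) / (alpha * alpha ^ n))
      by (simpl; field; split; auto; apply pow_nonzero; auto).
    unfold Rdiv. rewrite Rabs_mult, Rabs_inv, Rabs_mult, Hpow, Hrhn. fold A.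
    specialize (Hb n). specialize (HAn n).
    replace (K * / A * (th ^ n / A ^ n)) with (K * th ^ n * / (A * A ^ n)) by (field; lra).
    apply Rmult_le_compat_r; auto. left; apply Rinv_0_lt_compat, Rmult_lt_0_compat; lra. }
  assert (Happrox : forall n, Rabs (IZR (rec_seq n) - c * alpha ^ n) <= K / A / (1 - rh) * th ^ n).
  { intro n. specialize (Hc n). specialize (HAn n).
    replace (IZR (rec_seq n) - c * alpha ^ n) with (- (alpha ^ n * (c - IZR (rec_seq n) / alpha ^ n)))
      by (field; apply pow_nonzero; auto).
    rewrite Rabs_Ropp, Rabs_mult, Hpow. rewrite Hrhn in Hc.
    apply Rle_trans with (A ^ n * (K / A * (th ^ n / A ^ n) / (1 - rh))); [apply Rmult_le_compat_l; lra|].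
    right. field. lra. }
  assert (HB : 0 <= K / A / (1 - rh)).
  { unfold Rdiv. repeat apply Rmult_le_pos; try lra; left; apply Rinv_0_lt_compat; lra. }
  exists c, (K / A / (1 - rh)), th. split; [exact Hth|]. split; [exact HB|]. split; [|exact Happrox].
  intro Hc0. subst c. apply (rec_seq_not_geometric_decay _ th Hth HB).
  intro n. specialize (Happrox n). rewrite Rmult_0_l, Rminus_0_r in Happrox. auto.
Qed.

Lemma rec_seq_shift_relation c B th m p q : 0 <= th < 1 -> 0 <= B ->
  (forall n, Rabs (IZR (rec_seq n) - c * alpha ^ n) <= B * th ^ n) -> IZR q * alpha ^ m = IZR p ->
  forall n, (q * rec_seq (n + m) = p * rec_seq n)%Z.
Proof.
  intros Hth HB Happrox E.
  set (v := fun n => (q * rec_seq (n + m) + (- p) * rec_seq n)%Z).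
  assert (Hv : forall n, v n = 0%Z).
  { destruct low_coefs_head as [c0 [l' [El Hc0]]].
    apply (Zrecurrence_eventually_zero c0 l' v Hc0).
    - intro n. rewrite <- El. unfold v.
      rewrite (Zrecurrence_lin low_coefs (fun k => rec_seq (k + m)%nat) rec_seq q (-p) n),
        Zrecurrence_shift, !rec_seq_recurrence. ring.
    - apply (Z_geometric_decay_eventually_zero v ((Rabs (IZR q) + Rabs (IZR p)) * B) th Hth);
        [apply Rmult_le_pos; auto; pose proof (Rabs_pos (IZR q)); pose proof (Rabs_pos (IZR p)); lra|].
      intro n. unfold v. rewrite plus_IZR, !mult_IZR, opp_IZR.
      replace (IZR q * IZR (rec_seq (n + m)) + - IZR p * IZR (rec_seq n)) with
        (IZR q * (IZR (rec_seq (n + m)) - c * alpha ^ (n + m)) - IZR p * (IZR (rec_seq n) - c * alpha ^ n)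
         + c * alpha ^ n * (IZR q * alpha ^ m - IZR p)) by (rewrite pow_add; ring).
      rewrite E, Rminus_diag, Rmult_0_r, Rplus_0_r.
      eapply Rle_trans; [apply Rabs_triang|]. rewrite Rabs_Ropp, !Rabs_mult.
      pose proof (Happrox (n + m)%nat). pose proof (Happrox n).
      assert (th ^ (n + m) <= th ^ n) by (apply pow_le_pow_decr; lra || lia).
      pose proof (Rabs_pos (IZR q)); pose proof (Rabs_pos (IZR p)). pose proof (pow_le th n (proj1 Hth)).
      apply Rle_trans with (Rabs (IZR q) * (B * th ^ n) + Rabs (IZR p) * (B * th ^ n)); [|right; ring].
      apply Rplus_le_compat; apply Rmult_le_compat_l; nra. }
  intro n. specialize (Hv n). unfold v in Hv. lia.
Qed.

Lemma alpha_pow_irrational m p q : (1 <= m)%nat -> q <> 0%Z -> IZR q * alpha ^ m <> IZR p.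
Proof.
  intros Hm Hq E.
  destruct rec_seq_approx as [c [B [th [Hth [HB [Hc Happrox]]]]]].
  pose proof alpha_abs_gt1 as Ha. pose proof alpha_neq0 as Ha0.
  assert (Hp : 0 < Rabs (IZR p)).
  { rewrite <- E, Rabs_mult. apply Rmult_lt_0_compat; apply Rabs_pos_lt; [apply not_0_IZR; auto|].
    apply pow_nonzero; auto. }
  assert (Hqp : Rabs (IZR q) <= Rabs (IZR p)).
  { rewrite <- E, Rabs_mult, <- RPow_abs. pose proof (pow_R1_Rle (Rabs alpha) m ltac:(lra)).
    pose proof (Rabs_pos (IZR q)). nra. }
  pose proof (rec_seq_shift_relation c B th m p q Hth HB Happrox E) as Hrel.
  set (e := fun n => IZR (rec_seq n) - c * alpha ^ n).
  assert (He : forall n, e n = 0).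
  { apply (shift_relation_geometric_decay_zero e m B th (IZR p) (IZR q) Hm Hth HB Hp Hqp); [|exact Happrox].
    intro n. specialize (Hrel n). apply (f_equal IZR) in Hrel. rewrite !mult_IZR in Hrel.
    unfold e. rewrite pow_add.
    replace (IZR q * (IZR (rec_seq (n + m)) - c * (alpha ^ n * alpha ^ m)))
      with (IZR q * IZR (rec_seq (n + m)) - c * alpha ^ n * (IZR q * alpha ^ m)) by ring.
    rewrite E, Hrel. ring. }
  pose proof (He 0%nat) as E0. pose proof (He 1%nat) as E1. unfold e in E0, E1. simpl in E0, E1.
  apply (alpha_irrational (rec_seq 1) (rec_seq 0)).
  - intro Z0. rewrite Z0 in E0. apply Hc. simpl in E0. lra.
  - replace (IZR (rec_seq 0)) with c by lra. lra.
Qed.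

End PV.

Lemma is_PV_abs_gt1 alpha : is_PV alpha -> 1 < Rabs alpha.
Proof.
  intros (d & P & Hd & (Hl & Hlead & Hroot & Hmin) & Hconj).
  exact (alpha_abs_gt1 alpha d P Hd Hl Hlead Hroot Hmin Hconj).
Qed.

Lemma is_PV_pow_irrational alpha : is_PV alpha ->
  forall m p q, (1 <= m)%nat -> q <> 0%Z -> IZR q * alpha ^ m <> IZR p.
Proof.
  intros (d & P & Hd & (Hl & Hlead & Hroot & Hmin) & Hconj).
  exact (alpha_pow_irrational alpha d P Hd Hl Hlead Hroot Hmin Hconj).
Qed.

Lemma is_PV_approximation alpha : is_PV alpha -> exists (u : nat -> Z) c B th,
  0 <= th < 1 /\ 0 <= B /\ c <> 0 /\ forall n, Rabs (IZR (u n) - c * alpha ^ n) <= B * th ^ n.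
Proof.
  intros (d & P & Hd & (Hl & Hlead & Hroot & Hmin) & Hconj).
  exists (rec_seq d P). exact (rec_seq_approx alpha d P Hd Hl Hlead Hroot Hmin Hconj).
Qed.

(** * Choice of the starting point *)

Definition is_rational (x : R) := exists p q : Z, q <> 0%Z /\ IZR q * x = IZR p.

Lemma common_denominator (S : R -> Prop) :
  (forall x y, S x -> S y -> is_rational x -> is_rational y -> x = y) ->
  exists q0 : Z, (0 < q0)%Z /\ forall x, S x -> is_rational x -> exists m : Z, IZR q0 * x = IZR m.
Proof.
  intro Huniq. destruct (classic (exists x, S x /\ is_rational x)) as [[x0 [Sx0 Rx0]]|Hno].
  - destruct Rx0 as [p0 [q0 [Hq0 E0]]]. exists (Z.abs q0). split; [lia|].
    intros x Sx Rx. rewrite (Huniq x x0 Sx Sx0 Rx (ex_intro _ p0 (ex_intro _ q0 (conj Hq0 E0)))).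
    destruct (Z.abs_spec q0) as [[_ ->]|[_ ->]]; [exists p0; auto|].
    exists (- p0)%Z. rewrite !opp_IZR, <- E0. ring.
  - exists 1%Z. split; [lia|]. intros x Sx Rx. exfalso. apply Hno. eauto.
Qed.

Lemma rational_scaled_powers_eq alpha c i M j M' :
  alpha <> 0 -> (forall m p q, (1 <= m)%nat -> q <> 0%Z -> IZR q * alpha ^ m <> IZR p) ->
  is_rational (c * alpha ^ i / alpha ^ M) -> is_rational (c * alpha ^ j / alpha ^ M') ->
  c * alpha ^ i / alpha ^ M = c * alpha ^ j / alpha ^ M'.
Proof.
  intros Ha Hirr.
  assert (Hp : forall n, alpha ^ n <> 0) by (intro; apply pow_nonzero; auto).
  assert (Hgen : forall i M j M', (i + M' <= j + M)%nat ->
            is_rational (c * alpha ^ i / alpha ^ M) -> is_rational (c * alpha ^ j / alpha ^ M') ->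
            c * alpha ^ i / alpha ^ M = c * alpha ^ j / alpha ^ M').
  { clear i M j M'. intros i M j M' Hle [p1 [q1 [Hq1 E1]]] [p2 [q2 [Hq2 E2]]].
    set (k := (j + M - (i + M'))%nat).
    assert (Ek : c * alpha ^ j / alpha ^ M' = c * alpha ^ i / alpha ^ M * alpha ^ k).
    { assert (E : alpha ^ j * alpha ^ M = alpha ^ i * alpha ^ M' * alpha ^ k)
        by (rewrite <- !pow_add; f_equal; unfold k; lia).
      apply (Rmult_eq_reg_r (alpha ^ M * alpha ^ M')); [|apply Rmult_integral_contrapositive; auto].
      unfold Rdiv. replace (c * alpha ^ j * / alpha ^ M' * (alpha ^ M * alpha ^ M'))
        with (c * (alpha ^ j * alpha ^ M) * (alpha ^ M' * / alpha ^ M')) by ring.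
      rewrite E, Rinv_r by auto. field. auto. }
    rewrite Ek in *. set (x := c * alpha ^ i / alpha ^ M) in *.
    destruct k as [|k]; [simpl; ring|].
    destruct (Req_dec x 0) as [Hx|Hx]; [rewrite Hx; ring|]. exfalso.
    assert (Hp1 : p1 <> 0%Z).
    { intro; subst p1. apply Rmult_integral in E1. destruct E1; [apply Hq1, eq_IZR|]; auto. }
    apply (Hirr (S k) (q1 * p2)%Z (q2 * p1)%Z ltac:(lia) ltac:(lia)).
    rewrite !mult_IZR, <- E1, <- E2. ring. }
  intros Hr1 Hr2. destruct (Nat.le_ge_cases (i + M') (j + M)).
  - apply Hgen; auto.
  - symmetry. apply Hgen; auto.
Qed.

Lemma same_residue_multiplier_eq (bad : R -> Prop) T z s1 s2 m1 m2 :
  ((exists m : Z, T = IZR m) \/ (forall n : Z, n <> 0%Z -> forall m : Z, IZR n * T <> IZR m)) ->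
  (forall m : Z, ~ bad (IZR m)) -> bad (INR s1 * T) ->
  INR s1 * T = z + IZR m1 -> INR s2 * T = z + IZR m2 -> s1 = s2.
Proof.
  intros [[m Em]|Hirr] Hint Hbad E1 E2.
  - exfalso. apply (Hint (Z.of_nat s1 * m)%Z). rewrite mult_IZR, <- INR_IZR_INZ, <- Em. auto.
  - destruct (Nat.eq_dec s1 s2) as [|Hne]; auto. exfalso.
    apply (Hirr (Z.of_nat s1 - Z.of_nat s2)%Z ltac:(lia) (m1 - m2)%Z).
    rewrite !minus_IZR, <- !INR_IZR_INZ. lra.
Qed.

Lemma injective_into_prod_le (g : nat -> nat * nat) K L r :
  (forall s, (1 <= s <= K)%nat -> (fst (g s) < L)%nat /\ (snd (g s) < r)%nat) ->
  (forall s1 s2, (1 <= s1 <= K)%nat -> (1 <= s2 <= K)%nat -> g s1 = g s2 -> s1 = s2) ->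
  (K <= L * r)%nat.
Proof.
  intros Hrange Hinj.
  assert (HND : NoDup (map g (seq 1 K))).
  { apply NoDup_map_NoDup_ForallPairs; [|apply seq_NoDup].
    intros s1 s2 Hs1 Hs2 E. apply in_seq in Hs1. apply in_seq in Hs2. apply Hinj; auto; lia. }
  assert (Hincl : incl (map g (seq 1 K)) (list_prod (seq 0 L) (seq 0 r))).
  { intros p Hp. apply in_map_iff in Hp. destruct Hp as [s [Es Hs]]. apply in_seq in Hs.
    destruct (Hrange s ltac:(lia)) as [Hi Hj]. subst p. destruct (g s) as [i j]. simpl in *.
    apply in_prod_iff. split; apply in_seq; lia. }
  pose proof (NoDup_incl_length HND Hincl) as H.
  rewrite length_map, length_seq, length_prod, !length_seq in H. exact H.
Qed.

(** Pigeonhole: a bad multiple [s T_i] determines [i] and a residue in [Zl], and these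
    determine [s]. *)
Lemma exists_multiplier_avoiding (bad : R -> Prop) (Zl : list R) (T : nat -> R) (L K : nat) :
  (forall y, bad y -> exists z m, In z Zl /\ y = z + IZR m) ->
  (forall m : Z, ~ bad (IZR m)) ->
  (forall i, (i < L)%nat ->
     (exists m : Z, T i = IZR m) \/ (forall n : Z, n <> 0%Z -> forall m : Z, IZR n * T i <> IZR m)) ->
  (L * length Zl < K)%nat ->
  exists s, (1 <= s <= K)%nat /\ forall i, (i < L)%nat -> ~ bad (INR s * T i).
Proof.
  intros Hz Hint Hrat HK. apply NNPP. intro Hn.
  set (Q := fun s (p : nat * nat) => (fst p < L)%nat /\ (snd p < length Zl)%nat /\
     bad (INR s * T (fst p)) /\ exists m, INR s * T (fst p) = nth (snd p) Zl 0 + IZR m).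
  assert (Hall : forall s, (1 <= s <= K)%nat -> exists p, Q s p).
  { intros s Hs.
    assert (Hi : exists i, (i < L)%nat /\ bad (INR s * T i)).
    { apply NNPP. intro Hn2. apply Hn. exists s. split; auto. intros i Hi Hb. apply Hn2. eauto. }
    destruct Hi as [i [Hi Hb]]. destruct (Hz _ Hb) as [z [m [Hzin Hzm]]].
    destruct (In_nth Zl z 0 Hzin) as [j [Hj Hjz]].
    exists (i, j). unfold Q; simpl. rewrite Hjz. eauto. }
  set (g := fun s => epsilon (inhabits (0, 0)%nat) (Q s)).
  assert (Hg : forall s, (1 <= s <= K)%nat -> Q s (g s)) by (intros s Hs; apply epsilon_spec, Hall, Hs).
  assert (HKle : (K <= L * length Zl)%nat); [|lia].
  apply (injective_into_prod_le g).
  - intros s Hs. destruct (Hg s Hs) as [Hi [Hj _]]. auto.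
  - intros s1 s2 H1 H2 E.
    destruct (Hg s1 H1) as [Hi1 [_ [B1 [m1 E1]]]]. destruct (Hg s2 H2) as [_ [_ [_ [m2 E2]]]].
    rewrite E in B1, E1, Hi1.
    exact (same_residue_multiplier_eq bad _ _ s1 s2 m1 m2 (Hrat _ Hi1) Hint B1 E1 E2).
Qed.

Lemma two_pow_gt_linear a b : exists k, (a + b * k < 2 ^ k)%nat.
Proof.
  set (n := (a + 2 * b + 1)%nat). exists (2 * n)%nat.
  assert (Hn : (n + 1 <= 2 ^ n)%nat) by (clear; induction n; simpl; lia).
  replace (2 ^ (2 * n))%nat with (2 ^ n * 2 ^ n)%nat by (rewrite <- Nat.pow_add_r; f_equal; lia).
  unfold n in *. nia.
Qed.

Lemma scaled_point_lt (s : nat) (Q A r0 : R) (M1 M0 k : nat) : 0 < r0 -> 0 < A -> 0 <= Q ->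
  (Q + 1) / r0 <= A ^ M1 -> 2 <= A ^ M0 -> INR s <= 2 ^ k -> INR s * Q / A ^ (M1 + M0 * k) < r0.
Proof.
  intros Hr0 HA HQ HM1 HM0 Hs.
  assert (H2k : 2 ^ k <= (A ^ M0) ^ k) by (apply pow_incr; lra).
  assert (HAM1 : 0 < A ^ M1) by (apply pow_lt; lra).
  assert (Hpos : 0 < 2 ^ k) by (apply pow_lt; lra).
  assert (HQ1 : Q + 1 <= r0 * A ^ M1).
  { apply (Rmult_le_compat_l r0) in HM1; [|lra]. unfold Rdiv in HM1.
    rewrite Rmult_comm, Rmult_assoc, Rinv_l, Rmult_1_r in HM1 by lra. lra. }
  rewrite pow_add, pow_mult. pose proof (pos_INR s).
  apply (Rmult_lt_reg_r (A ^ M1 * (A ^ M0) ^ k)); [nra|].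
  unfold Rdiv. rewrite Rmult_assoc, Rinv_l, Rmult_1_r by nra. nra.
Qed.

Lemma tail_factor_le (s : nat) q B th N1 N0 k j : 0 <= th < 1 -> 0 <= B -> 0 <= q ->
  th ^ N0 <= 1 / 2 -> INR s <= 2 ^ k ->
  INR s * q * (B * th ^ (N1 + N0 * k + j)) <= q * B * th ^ N1 * th ^ j.
Proof.
  intros Hth HB Hq HN0 Hs. rewrite !pow_add, pow_mult.
  assert (Hk : (th ^ N0) ^ k <= (1 / 2) ^ k) by (apply pow_incr; split; [apply pow_le|]; lra).
  assert (E2 : 2 ^ k * (1 / 2) ^ k = 1).
  { rewrite <- Rpow_mult_distr. replace (2 * (1 / 2)) with 1 by field. apply pow1. }
  assert (Hsk : INR s * (th ^ N0) ^ k <= 1).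
  { pose proof (pos_INR s). pose proof (pow_le (th ^ N0) k (pow_le th N0 (proj1 Hth))).
    pose proof (pow_le (1 / 2) k ltac:(lra)). nra. }
  pose proof (pow_le th N1 (proj1 Hth)). pose proof (pow_le th j (proj1 Hth)).
  assert (0 <= q * B * th ^ N1 * th ^ j) by (repeat apply Rmult_le_pos; auto).
  replace (INR s * q * (B * (th ^ N1 * (th ^ N0) ^ k * th ^ j)))
    with ((INR s * (th ^ N0) ^ k) * (q * B * th ^ N1 * th ^ j)) by ring.
  nra.
Qed.

Lemma scaled_powers_integral_or_irrational alpha c :
  alpha <> 0 -> (forall m p q, (1 <= m)%nat -> q <> 0%Z -> IZR q * alpha ^ m <> IZR p) ->
  exists q0 : Z, (0 < q0)%Z /\ forall i M,
    (exists m : Z, IZR q0 * (c * alpha ^ i / alpha ^ M) = IZR m) \/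
    (forall n : Z, n <> 0%Z -> forall m : Z, IZR n * (IZR q0 * (c * alpha ^ i / alpha ^ M)) <> IZR m).
Proof.
  intros Ha0 Hirr.
  destruct (common_denominator (fun x => exists i M, x = c * alpha ^ i / alpha ^ M)) as [q0 [Hq0 Hden]].
  { intros x y [i [M ->]] [j [M' ->]]. apply rational_scaled_powers_eq; auto. }
  exists q0. split; auto. intros i M.
  destruct (classic (is_rational (c * alpha ^ i / alpha ^ M))) as [Hr|Hnr].
  - left. exact (Hden _ (ex_intro _ i (ex_intro _ M eq_refl)) Hr).
  - right. intros n Hn m E. apply Hnr. exists m, (n * q0)%Z. split; [lia|].
    rewrite mult_IZR, <- E. ring.
Qed.

Lemma scaled_orbit_near_integers alpha c B th (u : nat -> Z) (s : nat) q0 delta M N1 N0 k :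
  alpha <> 0 -> 0 <= th < 1 -> 0 <= B -> 0 <= IZR q0 ->
  (forall n, Rabs (IZR (u n) - c * alpha ^ n) <= B * th ^ n) ->
  IZR q0 * B * th ^ N1 <= delta -> th ^ N0 <= 1 / 2 -> INR s <= 2 ^ k ->
  forall j, exists m : Z,
    Rabs (alpha ^ (M + (N1 + N0 * k) + j) * (INR s * IZR q0 * c / alpha ^ M) - IZR m) <= delta * th ^ j.
Proof.
  intros Ha0 Hth HB Hq0 Hu HN1 HN0 Hs j. set (N := (N1 + N0 * k)%nat). pose proof (pos_INR s).
  exists (Z.of_nat s * q0 * u (N + j)%nat)%Z. rewrite !mult_IZR, <- INR_IZR_INZ.
  replace (alpha ^ (M + N + j) * (INR s * IZR q0 * c / alpha ^ M) - INR s * IZR q0 * IZR (u (N + j)%nat))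
    with (- (INR s * IZR q0 * (IZR (u (N + j)%nat) - c * alpha ^ (N + j))))
    by (rewrite <- Nat.add_assoc, (pow_add alpha M (N + j)); field; apply pow_nonzero; auto).
  rewrite Rabs_Ropp, Rabs_mult, (Rabs_right (INR s * IZR q0)) by nra.
  apply Rle_trans with (INR s * IZR q0 * (B * th ^ (N1 + N0 * k + j))).
  - apply Rmult_le_compat_l; [nra|]. apply Hu.
  - eapply Rle_trans; [apply tail_factor_le; lra|].
    apply Rmult_le_compat_r; [apply pow_le|]; lra.
Qed.

Lemma good_starting_point alpha c B th (u : nat -> Z) (Zl : list R) (bad : R -> Prop) r0 delta :
  1 < Rabs alpha -> 0 <= th < 1 -> 0 <= B -> c <> 0 ->
  (forall n, Rabs (IZR (u n) - c * alpha ^ n) <= B * th ^ n) ->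
  (forall m p q, (1 <= m)%nat -> q <> 0%Z -> IZR q * alpha ^ m <> IZR p) ->
  (forall y, bad y -> exists z m, In z Zl /\ y = z + IZR m) -> (forall m : Z, ~ bad (IZR m)) ->
  0 < r0 -> 0 < delta ->
  exists y0 L, 0 < Rabs y0 < r0 /\ (forall i, (i < L)%nat -> ~ bad (alpha ^ i * y0)) /\
    forall j, exists m : Z, Rabs (alpha ^ (L + j) * y0 - IZR m) <= delta * th ^ j.
Proof.
  intros Ha Hth HB Hc Hu Hirr Hz Hint Hr0 Hdelta.
  set (A := Rabs alpha) in *.
  assert (Ha0 : alpha <> 0) by (intro E; unfold A in Ha; rewrite E, Rabs_R0 in Ha; lra).
  destruct (scaled_powers_integral_or_irrational alpha c Ha0 Hirr) as [q0 [Hq0 Hdich]].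
  assert (Hq0R : 1 <= IZR q0) by (apply IZR_le; lia).
  destruct (geometric_eventually_lt (IZR q0 * B) th delta Hth ltac:(nra) Hdelta) as [N1 HN1].
  destruct (geometric_eventually_lt 1 th (1 / 2) Hth ltac:(lra) ltac:(lra)) as [N0 HN0].
  destruct (Pow_x_infinity A ltac:(rewrite Rabs_right; lra) ((IZR q0 * Rabs c + 1) / r0)) as [M1 HM1].
  destruct (Pow_x_infinity A ltac:(rewrite Rabs_right; lra) 2) as [M0 HM0].
  specialize (HN1 N1 (le_n _)). specialize (HN0 N0 (le_n _)).
  specialize (HM1 M1 (le_n _)). specialize (HM0 M0 (le_n _)).
  rewrite Rabs_right in HM1, HM0 by (apply Rle_ge, pow_le; lra).
  destruct (two_pow_gt_linear (length Zl * (M1 + N1)) (length Zl * (M0 + N0))) as [k Hk].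
  set (M := (M1 + M0 * k)%nat). set (N := (N1 + N0 * k)%nat).
  set (T := fun i => IZR q0 * (c * alpha ^ i / alpha ^ M)).
  destruct (exists_multiplier_avoiding bad Zl T (M + N) (2 ^ k) Hz Hint) as [s [Hs Hgood]];
    [intros i _; apply Hdich|unfold M, N; nia|].
  assert (HsR : 1 <= INR s <= 2 ^ k).
  { split; [apply (le_INR 1); lia|]. rewrite <- (pow_INR 2). apply le_INR. lia. }
  exists (INR s * IZR q0 * c / alpha ^ M), (M + N)%nat. split; [|split].
  - unfold Rdiv.
    rewrite !Rabs_mult, Rabs_inv, <- RPow_abs, (Rabs_right (INR s)), (Rabs_right (IZR q0)) by lra.
    fold A.
    assert (HAM : 0 < A ^ M) by (apply pow_lt; lra). split.
    + repeat apply Rmult_lt_0_compat; try lra; [apply Rabs_pos_lt; auto|apply Rinv_0_lt_compat, HAM].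
    + apply Rle_lt_trans with (INR s * (IZR q0 * Rabs c) / A ^ (M1 + M0 * k)); [right; unfold M, Rdiv; ring|].
      apply scaled_point_lt; try lra. pose proof (Rabs_pos c). nra.
  - intros i Hi. replace (alpha ^ i * (INR s * IZR q0 * c / alpha ^ M)) with (INR s * T i)
      by (unfold T; field; apply pow_nonzero; auto).
    apply Hgood. exact Hi.
  - apply (scaled_orbit_near_integers alpha c B th u s q0 delta M N1 N0 k); auto; lra.
Qed.

(** * Products along the orbit [alpha^n y] *)

Fixpoint Rprod (g : nat -> R) (n : nat) : R :=
  match n with O => 1 | S m => Rprod g m * g m end.

Lemma Rprod_add g a J : Rprod g (a + J) = Rprod g a * Rprod (fun j => g (a + j)%nat) J.
Proof.
  induction J; simpl; [rewrite Nat.add_0_r; ring|].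
  rewrite Nat.add_succ_r. simpl. rewrite IHJ. ring.
Qed.

Lemma Rprod_pos g n : (forall i, (i < n)%nat -> 0 < g i) -> 0 < Rprod g n.
Proof.
  induction n; intro H; simpl; [lra|].
  apply Rmult_lt_0_compat; [apply IHn; intros; apply H|apply H]; lia.
Qed.

Lemma Rprod_ge_1_minus_sum g x n : (forall j, 0 <= g j) -> (forall j, 0 <= x j) ->
  (forall j, 1 - x j <= g j) -> Rpsum x n <= 1 -> 1 - Rpsum x n <= Rprod g n.
Proof.
  intros Hg Hx Hgx. induction n; simpl; intro Hs; [lra|].
  pose proof (Hx n). specialize (Hgx n). specialize (Hg n).
  pose proof (Rpsum_ge0 x n Hx). specialize (IHn ltac:(lra)).
  assert ((1 - Rpsum x n) * (1 - x n) <= Rprod g n * g n) by (apply Rmult_le_compat; lra).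
  nra.
Qed.

Lemma orbit_modulus_product (alpha A : R) (f phihat : R -> Cplx) y n : 0 < A ->
  (forall y, A * Cmod (phihat (alpha * y)) = Cmod (f y) * Cmod (phihat y)) ->
  Cmod (phihat (alpha ^ n * y)) = Rprod (fun i => Cmod (f (alpha ^ i * y)) / A) n * Cmod (phihat y).
Proof.
  intros HA Hrel. induction n; simpl; [rewrite !Rmult_1_l; auto|].
  apply (Rmult_eq_reg_l A); [|lra]. rewrite Rmult_assoc, Hrel, IHn. field. lra.
Qed.

(** Near the integers [|f| / A] is [1 - O(dist)], and the distances decay geometrically. *)
Lemma orbit_product_lower_bound (alpha A Lc delta th y0 : R) (f : R -> Cplx) (L : nat) :
  0 < A -> 0 <= Lc -> 0 <= delta -> 0 <= th < 1 -> Lc * delta <= A * (1 - th) / 2 ->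
  (forall y (m : Z), A - Lc * Rabs (y - IZR m) <= Cmod (f y)) ->
  (forall i, (i < L)%nat -> f (alpha ^ i * y0) <> C0) ->
  (forall j, exists m : Z, Rabs (alpha ^ (L + j) * y0 - IZR m) <= delta * th ^ j) ->
  exists eps, 0 < eps /\ forall J, eps <= Rprod (fun i => Cmod (f (alpha ^ i * y0)) / A) (L + J).
Proof.
  intros HA HLc Hdelta Hth Hsmall Hnear Hhead Htail.
  set (g := fun i => Cmod (f (alpha ^ i * y0)) / A).
  assert (Hg : forall i, 0 <= g i).
  { intro. apply Rmult_le_pos; [apply Cmod_ge0|left; apply Rinv_0_lt_compat; lra]. }
  assert (Hhead_pos : 0 < Rprod g L).
  { apply Rprod_pos. intros i Hi. apply Rdiv_lt_0_compat; [apply Cmod_gt0, Hhead|]; auto. }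
  set (x := fun j => Lc / A * delta * th ^ j).
  assert (Hx : forall j, 0 <= x j).
  { intro j. apply Rmult_le_pos; [apply Rmult_le_pos; [apply Rmult_le_pos|]|apply pow_le]; try lra.
    left; apply Rinv_0_lt_compat; lra. }
  assert (Hgx : forall j, 1 - x j <= g (L + j)%nat).
  { intro j. destruct (Htail j) as [m Hm]. specialize (Hnear (alpha ^ (L + j) * y0) m).
    unfold g, x. apply (Rmult_le_reg_l A); [lra|]. unfold Rdiv.
    replace (A * (1 - Lc * / A * delta * th ^ j)) with (A - Lc * (delta * th ^ j)) by (field; lra).
    replace (A * (Cmod (f (alpha ^ (L + j) * y0)) * / A)) with (Cmod (f (alpha ^ (L + j) * y0)))
      by (field; lra).
    pose proof (Rmult_le_compat_l Lc _ _ HLc Hm). lra. }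
  assert (Hsum : forall J, Rpsum x J <= 1 / 2).
  { intro J. eapply Rle_trans; [apply Rpsum_geom_le; auto|].
    - apply Rmult_le_pos; [apply Rmult_le_pos|]; try lra. left; apply Rinv_0_lt_compat; lra.
    - apply (Rmult_le_reg_r (A * (1 - th))); [apply Rmult_lt_0_compat; lra|].
      replace (Lc / A * delta / (1 - th) * (A * (1 - th))) with (Lc * delta) by (field; lra). lra. }
  exists (Rprod g L / 2). split; [lra|]. intro J. rewrite Rprod_add.
  pose proof (Rprod_ge_1_minus_sum (fun j => g (L + j)%nat) x J (fun j => Hg _) Hx Hgx
                ltac:(specialize (Hsum J); lra)).
  specialize (Hsum J). nra.
Qed.

Lemma not_vanishing_of_orbit_lower_bound (alpha y0 eps : R) (phihat : R -> Cplx) (L : nat) :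
  1 < Rabs alpha -> y0 <> 0 -> 0 < eps ->
  (forall J, eps <= Cmod (phihat (alpha ^ (L + J) * y0))) -> ~ vanishes_at_infinity phihat.
Proof.
  intros Ha Hy0 Heps Hlow Hvan. destruct (Hvan eps Heps) as [M HM].
  pose proof (Rabs_pos_lt y0 Hy0) as Hy.
  destruct (Pow_x_infinity (Rabs alpha) ltac:(rewrite Rabs_Rabsolu; lra) ((Rabs M + 1) / Rabs y0)) as [n Hn].
  specialize (Hn (L + n)%nat ltac:(lia)). rewrite RPow_abs, Rabs_Rabsolu, <- RPow_abs in Hn.
  assert (Hfar : Rabs (alpha ^ (L + n) * y0) > M).
  { rewrite Rabs_mult, <- RPow_abs. apply Rmult_ge_compat_r with (r := Rabs y0) in Hn; [|lra].
    replace ((Rabs M + 1) / Rabs y0 * Rabs y0) with (Rabs M + 1) in Hn by (field; lra).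
    pose proof (Rle_abs M). lra. }
  specialize (HM _ Hfar). specialize (Hlow n). lra.
Qed.

Lemma Ccontinuous_lower_bound_near (g : R -> Cplx) x : Ccontinuous g -> g x <> C0 ->
  exists r, 0 < r /\ forall y, Rabs (y - x) < r -> Cmod (g x) / 2 <= Cmod (g y).
Proof.
  intros Hg Hx. pose proof (Cmod_gt0 _ Hx).
  destruct (Hg x (Cmod (g x) / 2)) as [r [Hr Hcont]]; [lra|].
  exists r. split; auto. intros y Hy. specialize (Hcont y Hy).
  pose proof (Cmod_sub_ge (g x) (g y)). rewrite Cmod_sub_sym in Hcont. lra.
Qed.

Lemma refinable_FT_modulus alpha a tau phihat : alpha <> 0 -> refinable_FT alpha a tau phihat ->
  forall y, Rabs alpha * Cmod (phihat (alpha * y)) = Cmod (mask_symbol a tau y) * Cmod (phihat y).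
Proof.
  intros Ha [_ [_ Hfe]] y. destruct (Hfe (alpha * y)) as [v [Hv Ev]].
  replace (alpha * y / alpha) with y in * by (field; auto).
  unfold mask_symbol.
  rewrite Ev, (Csum_eq (mask_term a tau y) _ Hv), !Cmod_mul, Cmod_RtoC, Rabs_Rabsolu. ring.
Qed.

Lemma not_vanishing_of_good_point (alpha A Lc delta th r0 y0 : R) (f phihat : R -> Cplx) (L : nat) :
  1 < Rabs alpha -> 0 < A -> 0 <= Lc -> 0 <= delta -> 0 <= th < 1 -> Lc * delta <= A * (1 - th) / 2 ->
  (forall y, A * Cmod (phihat (alpha * y)) = Cmod (f y) * Cmod (phihat y)) ->
  (forall y (m : Z), A - Lc * Rabs (y - IZR m) <= Cmod (f y)) ->
  phihat 0 <> C0 -> (forall y, Rabs (y - 0) < r0 -> Cmod (phihat 0) / 2 <= Cmod (phihat y)) ->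
  0 < Rabs y0 < r0 -> (forall i, (i < L)%nat -> f (alpha ^ i * y0) <> C0) ->
  (forall j, exists m : Z, Rabs (alpha ^ (L + j) * y0 - IZR m) <= delta * th ^ j) ->
  ~ vanishes_at_infinity phihat.
Proof.
  intros Ha HA HLc Hdelta Hth HLcdelta Hrel Hnear H0 Hnear0 Hy0 Hhead Htail.
  destruct (orbit_product_lower_bound alpha A Lc delta th y0 f L) as [eps [Heps Hprod]]; auto.
  pose proof (Cmod_gt0 _ H0).
  apply (not_vanishing_of_orbit_lower_bound alpha y0 (eps * (Cmod (phihat 0) / 2)) phihat L Ha);
    [intro E; rewrite E, Rabs_R0 in Hy0; lra|nra|].
  intro J. rewrite (orbit_modulus_product alpha A f phihat y0 (L + J) HA Hrel).
  apply Rmult_le_compat; auto; try lra. apply Hnear0. rewrite Rminus_0_r. lra.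
Qed.

Theorem mainTheorem1 (alpha : R) (a : nat -> Cplx) (tau : nat -> Z) (phihat : R -> Cplx) :
  is_PV alpha ->
  (exists eta, eta > 0 /\ exists l,
     infinite_sum (fun k => Cmod (a k) * exp (eta * Rabs (IZR (tau k)))) l) ->
  Cseries a (RtoC (Rabs alpha)) ->
  refinable_FT alpha a tau phihat ->
  ~ vanishes_at_infinity phihat.
Proof.
  intros HPV [eta [Heta [l Hl]]] Hsum Hrefin.
  pose proof (is_PV_abs_gt1 alpha HPV) as Ha.
  destruct (is_PV_approximation alpha HPV) as [u [c [B [th [Hth [HB [Hc Hu]]]]]]].
  set (A := Rabs alpha) in *. set (f := mask_symbol a tau).
  assert (Hf0 : Cmod (f 0) = A).
  { unfold f. rewrite (mask_symbol_at_0 a tau _ Hsum), Cmod_RtoC. apply Rabs_right. lra. }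
  assert (Hint : forall m : Z, f (IZR m) <> C0).
  { intros m E. unfold f in E, Hf0.
    rewrite <- (Rplus_0_l (IZR m)), (mask_symbol_periodic a tau eta l Heta Hl) in E.
    rewrite E, Cmod_C0 in Hf0. lra. }
  set (Lc := 2 * rho eta * l).
  assert (HLc : 0 <= Lc).
  { pose proof (rho_pos eta Heta). pose proof (weights_sum_ge0 a tau eta l Hl). unfold Lc. nra. }
  set (delta := A * (1 - th) / (2 * (Lc + 1))).
  assert (Hdelta : 0 < delta) by (apply Rdiv_lt_0_compat; nra).
  assert (HLcdelta : Lc * delta <= A * (1 - th) / 2).
  { apply (Rmult_le_reg_r (2 * (Lc + 1))); [lra|]. unfold delta. field_simplify; nra. }
  pose proof Hrefin as [Hcont [H0 _]].
  destruct (Ccontinuous_lower_bound_near phihat 0 Hcont H0) as [r0 [Hr0 Hnear0]].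
  destruct (mask_symbol_zeros_mod1 a tau eta l Heta Hl (Hint 0%Z)) as [Zl HZl].
  destruct (good_starting_point alpha c B th u Zl (fun y => f y = C0) r0 delta Ha Hth HB Hc Hu
              (is_PV_pow_irrational alpha HPV) HZl Hint Hr0 Hdelta) as [y0 [L [Hy0 [Hhead Htail]]]].
  apply (not_vanishing_of_good_point alpha A Lc delta th r0 y0 f phihat L); auto; try lra.
  - apply refinable_FT_modulus; auto. intro E. unfold A in Ha. rewrite E, Rabs_R0 in Ha. lra.
  - intros y m. rewrite <- Hf0. apply (mask_symbol_near_integer a tau eta l Heta Hl).
Qed.
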